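(* Let $\mathcal{X}$ and $\mathcal{Y}$ be arbitrary finite alphabets with $|\mathcal{X}|\geq 2$ and $|\mathcal{Y}|\geq 2$. Let $\mathcal{M}(\mathcal{X},\mathcal{Y})$ be the set of all functions $F_{\mathrm{opt}}$ which take as input a computable source distribution $P_X\in\mathcal{P}_{\mathrm{c}}(\mathcal{X})$, a computable distortion measure $d:\mathcal{X}\times\mathcal{Y}\to\mathbb{R}_{\geq0,\mathrm{c}}$ and a computable distortion level $D\in\mathbb{R}_{\mathrm{c}}$, and output some optimal test channel $P^{*}_{Y|X}\in\mathcal{P}_{\mathrm{opt}}(d,D,P_X)$. Then, provided the source probability $P_X$ is non-trivial, there exists no function $F_{\mathrm{opt}}\in\mathcal{M}(\mathcal{X},\mathcal{Y})$ that is Banach–Mazur computable (and hence none that is Turing computable).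
   Context: A real number $x$ is computable if there are recursive functions producing a sequence of rationals $r_k$ and a recursive modulus $e$ with $|x-r_k|\leq 2^{-N}$ for all $k\geq e(N)$; $\mathbb{R}_{\mathrm{c}}$ denotes the computable reals, and a sequence of reals (or of finite tuples/matrices of reals) is computable if the approximating rationals and modulus can be given uniformly by recursive functions of the index. $\mathcal{P}_{\mathrm{c}}(\mathcal{X})$ denotes the probability distributions on $\mathcal{X}$ with computable entries, and $\mathbb{R}_{\geq0,\mathrm{c}}$ the non-negative computable reals. A distortion measure is a function $d:\mathcal{X}\times\mathcal{Y}\to\mathbb{R}_{\geq 0}$. For a source distribution $P_X$, distortion measure $d$ and level $D$, the rate distortion function is $R(D)=\inf\{I(X;Y): P_{Y|X},\ \sum_{x,y}P_X(x)P_{Y|X}(y|x)d(x,y)\leq D\}$, the infimum over all transition probability matrices (test channels) $P_{Y|X}$, with $I(X;Y)$ the mutual information of the joint distribution $P_X P_{Y|X}$; $\mathcal{P}_{\mathrm{opt}}(d,D,P_X)$ is the set of test channels attaining this minimum. A function $F$ defined on tuples of computable reals (here $(P_X,d,D)$) with values in tuples of reals (here transition matrices) is Banach–Mazur computable if it maps every computable sequence of inputs to a computable sequence of outputs. *)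

(* classical reals R, finite alphabets X = {0..m-1}, Y = {0..n-1}. *)
From Stdlib Require Import Reals List Arith.
Import ListNotations.
Open Scope R_scope.

Inductive code : Type :=
| Zero : code
| Succ : code
| Proj : nat -> code
| Comp : code -> list code -> code
| Prec : code -> code -> code
| Mu   : code -> code.

Inductive eval : code -> list nat -> nat -> Prop :=
| eZero v : eval Zero v 0
| eSucc x v : eval Succ (x :: v) (S x)
| eProj i v : (i < length v)%nat -> eval (Proj i) v (nth i v 0%nat)
| eComp f gs v ws y : evals gs v ws -> eval f ws y -> eval (Comp f gs) v y
| ePrec0 f g v y : eval f v y -> eval (Prec f g) (0%nat :: v) y
| ePrecS f g k v r y :
    eval (Prec f g) (k :: v) r -> eval g (k :: r :: v) y ->
    eval (Prec f g) (S k :: v) y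
| eMu f v k :
    eval f (k :: v) 0%nat ->
    (forall l, (l < k)%nat -> exists z, eval f (l :: v) (S z)) ->
    eval (Mu f) v k
with evals : list code -> list nat -> list nat -> Prop :=
| esNil v : evals [] v []
| esCons g gs v y ys : eval g v y -> evals gs v ys -> evals (g :: gs) v (y :: ys).

Definition recursive (k : nat) (f : list nat -> nat) : Prop :=
  exists c : code, forall v, length v = k -> eval c v (f v).

Definition qof (s a b : nat) : R :=
  (if Nat.even s then 1 else -1) * INR a / INR (S b).

Definition comp_family (k : nat) (dom : list nat -> Prop) (x : list nat -> R) : Prop :=
  exists s a b e : list nat -> nat,
    recursive (S k) s /\ recursive (S k) a /\ recursive (S k) b /\
    recursive (S k) e /\
    forall v, length v = k -> dom v ->
      forall (N j : nat), (e (v ++ [N]) <= j)%nat ->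
        Rabs (x v - qof (s (v ++ [j])) (a (v ++ [j])) (b (v ++ [j]))) <= (/2) ^ N.

Definition comp_real (x : R) : Prop := comp_family 0 (fun _ => True) (fun _ => x).

Definition fsum (n : nat) (f : nat -> R) : R :=
  fold_right Rplus 0 (map f (seq 0 n)).

Definition is_distr (m : nat) (P : nat -> R) : Prop :=
  (forall i, (i < m)%nat -> 0 <= P i) /\ fsum m P = 1.

Definition comp_distr (m : nat) (P : nat -> R) : Prop :=
  is_distr m P /\ forall i, (i < m)%nat -> comp_real (P i).

Definition nontrivial (m : nat) (P : nat -> R) : Prop :=
  ~ (exists i, (i < m)%nat /\ P i = 1).

Definition comp_distortion (m n : nat) (d : nat -> nat -> R) : Prop :=
  forall i j, (i < m)%nat -> (j < n)%nat -> 0 <= d i j /\ comp_real (d i j).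

Definition is_channel (m n : nat) (W : nat -> nat -> R) : Prop :=
  forall i, (i < m)%nat ->
    (forall j, (j < n)%nat -> 0 <= W i j) /\ fsum n (W i) = 1.

Definition avg_distortion (m n : nat) (P : nat -> R) (d W : nat -> nat -> R) : R :=
  fsum m (fun i => fsum n (fun j => P i * W i j * d i j)).

Definition out_distr (m : nat) (P : nat -> R) (W : nat -> nat -> R) (j : nat) : R :=
  fsum m (fun i => P i * W i j).

(** Mutual information I(X;Y) of P_X P_{Y|X} (natural log; convention 0 log 0 = 0). *)
Definition mutinf (m n : nat) (P : nat -> R) (W : nat -> nat -> R) : R :=
  fsum m (fun i => fsum n (fun j =>
    let p := P i * W i j in
    if Req_EM_T p 0 then 0 else p * ln (W i j / out_distr m P W j))).

Definition feasible (m n : nat) (d : nat -> nat -> R) (D : R) (P : nat -> R)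
  (W : nat -> nat -> R) : Prop :=
  is_channel m n W /\ avg_distortion m n P d W <= D.

Definition P_opt (m n : nat) (d : nat -> nat -> R) (D : R) (P : nat -> R)
  (W : nat -> nat -> R) : Prop :=
  feasible m n d D P W /\
  forall W', feasible m n d D P W' -> mutinf m n P W <= mutinf m n P W'.

Definition OptFun (m n : nat) : Type :=
  (nat -> R) -> (nat -> nat -> R) -> R -> (nat -> nat -> R).

Definition admissible (m n : nat) (P : nat -> R) (d : nat -> nat -> R) (D : R) : Prop :=
  comp_distr m P /\ nontrivial m P /\ comp_distortion m n d /\ comp_real D /\
  exists W, P_opt m n d D P W.

Definition in_M (m n : nat) (F : OptFun m n) : Prop :=
  forall P d D, admissible m n P d D -> P_opt m n d D P (F P d D).

Definition BM_computable (m n : nat) (F : OptFun m n) : Prop :=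
  forall (Ps : nat -> nat -> R) (ds : nat -> nat -> nat -> R) (Ds : nat -> R),
    comp_family 2 (fun v => (nth 1 v 0 < m)%nat)
      (fun v => Ps (nth 0 v 0%nat) (nth 1 v 0%nat)) ->
    comp_family 3 (fun v => (nth 1 v 0 < m)%nat /\ (nth 2 v 0 < n)%nat)
      (fun v => ds (nth 0 v 0%nat) (nth 1 v 0%nat) (nth 2 v 0%nat)) ->
    comp_family 1 (fun _ => True) (fun v => Ds (nth 0 v 0%nat)) ->
    (forall k, admissible m n (Ps k) (ds k) (Ds k)) ->
    comp_family 3 (fun v => (nth 1 v 0 < m)%nat /\ (nth 2 v 0 < n)%nat)
      (fun v => F (Ps (nth 0 v 0%nat)) (ds (nth 0 v 0%nat)) (Ds (nth 0 v 0%nat))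
                  (nth 1 v 0%nat) (nth 2 v 0%nat)).

(* The optimal test channel depends discontinuously on the distortion measure.  Take the
   source (1/2, 1/2, 0, ..., 0), the level D = 0, and the distortion that vanishes on the
   diagonal of the first two rows, is 1 elsewhere in these rows, except for d(0,1) = x >= 0.
   A channel of zero distortion sends 1 to 1 and 0 into {0, 1}.  If x > 0 it must send 0 to 0,
   so every optimal channel W has W(0,0) = 1; if x = 0 the channel sending 0 to 1 has zero
   mutual information, so every optimal W has W(0,0) < 1.

   Let x_k = 2^-t, where t is the least code of a computation showing that the program
   numbered k returns 0 on input k, and x_k = 0 if there is none.  The sequence (x_k) is
   computable, since validity of a coded computation trace is checked by a primitive
   recursive expression.  A Banach-Mazur computable F would turn it into a computable
   sequence of entries W_k(0,0) equal to 1 when x_k > 0 and to a fixed value below 1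
   otherwise; approximating these entries to within a quarter of the gap decides whether
   program k returns 0 on input k, which the diagonal argument forbids. *)

From Stdlib Require Import Reals List Arith Lia Lra Classical ClassicalEpsilon ConstructiveEpsilon.
Import ListNotations.

Open Scope nat_scope.

Section CodeInduction.
Variable P : code -> Prop.
Hypothesis P_Zero : P Zero.
Hypothesis P_Succ : P Succ.
Hypothesis P_Proj : forall i, P (Proj i).
Hypothesis P_Comp : forall f gs, P f -> Forall P gs -> P (Comp f gs).
Hypothesis P_Prec : forall f g, P f -> P g -> P (Prec f g).
Hypothesis P_Mu : forall f, P f -> P (Mu f).

Fixpoint code_nested_ind (c : code) : P c :=
  match c with
  | Zero => P_Zero
  | Succ => P_Succ
  | Proj i => P_Proj i
  | Comp f gs => P_Comp f gs (code_nested_ind f)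
      ((fix all l := match l return Forall P l with
        | [] => Forall_nil _
        | g :: l' => Forall_cons _ (code_nested_ind g) (all l') end) gs)
  | Prec f g => P_Prec f g (code_nested_ind f) (code_nested_ind g)
  | Mu f => P_Mu f (code_nested_ind f)
  end.
End CodeInduction.

Lemma eval_deterministic c v y y' : eval c v y -> eval c v y' -> y = y'.
Proof.
  revert v y y'.
  induction c as [| |i|f gs IHf IHgs|f g IHf IHg|f IHf] using code_nested_ind;
    intros v y y' H1 H2.
  - inversion H1; inversion H2; subst; auto.
  - inversion H1; inversion H2; subst; congruence.
  - inversion H1; inversion H2; subst; auto.
  - inversion H1; subst; inversion H2; subst.
    assert (ws = ws0) as ->; [|eauto].
    match goal with A : evals gs v ws, B : evals gs v ws0 |- _ =>
      clear -IHgs A B; revert ws ws0 A B end.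
    induction IHgs as [|g gs' Hg Hgs IH]; intros ws ws0 A B.
    + inversion A; inversion B; auto.
    + inversion A; subst; inversion B; subst. f_equal; eauto.
  - destruct v as [|k v]; [inversion H1|].
    revert y y' H1 H2; induction k; intros y y' H1 H2.
    + inversion H1; subst; inversion H2; subst; eauto.
    + inversion H1; subst; inversion H2; subst.
      assert (r = r0) as -> by eauto. eauto.
  - inversion H1 as [| | | | | |f1 v1 k1 Hk1 Hlt1]; subst.
    inversion H2 as [| | | | | |f2 v2 k2 Hk2 Hlt2]; subst.
    destruct (Nat.lt_trichotomy y y') as [Hl|[He|Hl]]; auto.
    + destruct (Hlt2 _ Hl) as [z Hz]. discriminate (IHf _ _ _ Hk1 Hz).
    + destruct (Hlt1 _ Hl) as [z Hz]. discriminate (IHf _ _ _ Hk2 Hz).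
Qed.

Lemma recursive_ext k f g :
  recursive k f -> (forall v, length v = k -> f v = g v) -> recursive k g.
Proof. intros [c Hc] E. exists c. intros v Hv. rewrite <- E by auto. auto. Qed.

Fixpoint const_code (n : nat) : code :=
  match n with 0 => Zero | S n => Comp Succ [const_code n] end.

Lemma eval_const_code n v : eval (const_code n) v n.
Proof. induction n; repeat econstructor; eauto. Qed.

Lemma recursive_const k n : recursive k (fun _ => n).
Proof. exists (const_code n). intros; apply eval_const_code. Qed.

Lemma recursive_proj k i : recursive k (fun v => nth i v 0).
Proof.
  destruct (Nat.lt_ge_cases i k).
  - exists (Proj i). intros v Hv. constructor. lia.
  - exists Zero. intros v Hv. rewrite nth_overflow by lia. constructor.
Qed.

Lemma recursive_succ : recursive 1 (fun v => S (nth 0 v 0)).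
Proof. exists Succ. intros [|x [|]] Hv; simpl in Hv; try lia. constructor. Qed.

Lemma recursive_comp j k g fs :
  recursive j g -> Forall (recursive k) fs -> length fs = j ->
  recursive k (fun v => g (map (fun f => f v) fs)).
Proof.
  intros [cg Hg] HF Hl.
  assert (exists cs, forall v, length v = k -> evals cs v (map (fun f => f v) fs))
    as [cs Hcs].
  { clear Hl. induction HF as [|f fs' [cf Hf] _ [cs IH]].
    - exists []. intros; constructor.
    - exists (cf :: cs). intros; simpl; constructor; auto. }
  exists (Comp cg cs). intros v Hv. econstructor.
  - apply Hcs; auto.
  - apply Hg. rewrite length_map; auto.
Qed.

Lemma recursive_prec k base step :
  recursive k base -> recursive (S (S k)) step ->
  recursive (S k) (fun v => nat_rect (fun _ => nat) (base (tl v))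
                              (fun i acc => step (i :: acc :: tl v)) (hd 0 v)).
Proof.
  intros [cb Hb] [cs Hs]. exists (Prec cb cs). intros [|n v] Hv; simpl in Hv; [lia|].
  injection Hv as Hv. simpl. induction n; simpl.
  - constructor. auto.
  - econstructor; [apply IHn | apply Hs; simpl; lia].
Qed.

Lemma map_nth_seq (v : list nat) : map (fun i => nth i v 0) (seq 0 (length v)) = v.
Proof.
  induction v as [|a v IH]; simpl; auto.
  rewrite <- seq_shift, List.map_map. simpl. f_equal. exact IH.
Qed.

Lemma recursive_reindex j k g (idx : list nat) :
  recursive j g -> length idx = j -> recursive k (fun v => g (map (fun i => nth i v 0) idx)).
Proof.
  intros Hg Hl. eapply recursive_ext.
  - apply (recursive_comp j k g (map (fun i v => nth i v 0) idx)); auto.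
    + apply Forall_map, Forall_forall. intros; apply recursive_proj.
    + rewrite length_map; auto.
  - intros v _. cbv beta. f_equal. clear. induction idx; simpl; f_equal; auto.
Qed.

(** * Primitive recursive expressions *)

Inductive expr : Type :=
| EVar (i : nat)
| EConst (n : nat)
| ESucc (e : expr)
| ERec (count base step : expr)
| EDrop (e : expr)
| EDrop1 (e : expr).

Fixpoint denote (e : expr) (env : list nat) : nat :=
  match e with
  | EVar i => nth i env 0
  | EConst n => n
  | ESucc e => S (denote e env)
  | ERec count base step =>
      nat_rect (fun _ => nat) (denote base env)
        (fun i acc => denote step (i :: acc :: env)) (denote count env)
  | EDrop e => denote e (tl env)
  | EDrop1 e => denote e (hd 0 env :: tl (tl env))
  end.

Theorem denote_recursive e k : recursive k (denote e).
Proof.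
  revert k.
  induction e as [i|n|e IH|N IHN B IHB St IHS|e IH|e IH]; intros k.
  - apply recursive_proj.
  - apply recursive_const.
  - eapply recursive_ext.
    + apply (recursive_comp 1 k (fun v => S (nth 0 v 0)) [denote e]);
        [apply recursive_succ | auto | reflexivity].
    + reflexivity.
  - pose proof (recursive_prec k _ _ (IHB k) (IHS (S (S k)))) as Hrec.
    eapply recursive_ext.
    + apply (recursive_comp (S k) k _ (denote N :: map (fun i v => nth i v 0) (seq 0 k)) Hrec).
      * constructor; auto. apply Forall_map, Forall_forall. intros; apply recursive_proj.
      * simpl. rewrite length_map, length_seq; auto.
    + intros v Hv. simpl. rewrite List.map_map, <- Hv, map_nth_seq. reflexivity.
  - destruct k as [|k].
    + eapply recursive_ext; [apply (recursive_const 0 (denote e []))|].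
      intros v Hv. apply length_zero_iff_nil in Hv; subst; reflexivity.
    + eapply recursive_ext;
        [apply (recursive_reindex k (S k) (denote e) (seq 1 k)); auto; apply length_seq|].
      intros [|a v] Hv; simpl in Hv; [lia|]. injection Hv as Hv.
      simpl. rewrite <- seq_shift, List.map_map, <- Hv, map_nth_seq. reflexivity.
  - destruct k as [|[|k]].
    + eapply recursive_ext; [apply (recursive_const 0 (denote e [0]))|].
      intros v Hv. apply length_zero_iff_nil in Hv; subst; reflexivity.
    + eapply recursive_ext; [apply (IH 1)|].
      intros [|a [|b v]] Hv; simpl in Hv; try lia. reflexivity.
    + eapply recursive_ext.
      * apply (recursive_reindex (S k) (S (S k)) (denote e) (0 :: seq 2 k)); auto.
        simpl; rewrite length_seq; auto.
      * intros [|a [|b v]] Hv; simpl in Hv; try lia. injection Hv as Hv.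
        simpl. rewrite <- !seq_shift, !List.map_map, <- Hv, map_nth_seq. reflexivity.
Qed.

Definition EAdd a b := ERec a b (ESucc (EVar 1)).
Lemma denote_EAdd a b env : denote (EAdd a b) env = denote a env + denote b env.
Proof.
  unfold EAdd. cbn [denote nth hd tl].
  induction (denote a env); cbn [nat_rect denote nth]; lia.
Qed.

Definition EPred a := ERec a (EConst 0) (EVar 0).
Lemma denote_EPred a env : denote (EPred a) env = pred (denote a env).
Proof. unfold EPred. cbn. destruct (denote a env); reflexivity. Qed.

Definition ESub a b := ERec b a (EPred (EVar 1)).
Lemma denote_ESub a b env : denote (ESub a b) env = denote a env - denote b env.
Proof.
  unfold ESub.
  cbn [denote nth hd tl]. induction (denote b env) as [|k IH]; cbn [nat_rect]; [lia|].
  rewrite denote_EPred. cbn [denote nth]. rewrite IH. lia.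
Qed.

Definition EMul a b := ERec a (EConst 0) (EAdd (EVar 1) (EDrop (EDrop b))).
Lemma denote_EMul a b env : denote (EMul a b) env = denote a env * denote b env.
Proof.
  unfold EMul.
  cbn [denote nth hd tl]. induction (denote a env) as [|k IH]; cbn [nat_rect]; auto.
  rewrite denote_EAdd. cbn [denote nth tl]. rewrite IH. lia.
Qed.

Definition EPow2 a := ERec a (EConst 1) (EAdd (EVar 1) (EVar 1)).
Lemma denote_EPow2 a env : denote (EPow2 a) env = 2 ^ denote a env.
Proof.
  unfold EPow2.
  cbn [denote nth hd tl]. induction (denote a env) as [|k IH]; cbn [nat_rect]; auto.
  rewrite denote_EAdd. cbn [denote nth tl]. rewrite IH. simpl. lia.
Qed.

Definition ifz (n a b : nat) : nat := match n with 0 => a | S _ => b end.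

Definition EIfz c a b := ERec c a (EDrop (EDrop b)).
Lemma denote_EIfz c a b env :
  denote (EIfz c a b) env = ifz (denote c env) (denote a env) (denote b env).
Proof. unfold EIfz. cbn. destruct (denote c env); reflexivity. Qed.

Definition EParity a := ERec a (EConst 0) (ESub (EConst 1) (EVar 1)).
Lemma denote_EParity a env :
  denote (EParity a) env = Nat.b2n (negb (Nat.even (denote a env))).
Proof.
  unfold EParity. cbn [denote nth hd tl].
  induction (denote a env) as [|k IH]; cbn [nat_rect]; [reflexivity|].
  rewrite denote_ESub. cbn [denote nth]. rewrite IH, Nat.even_succ, <- Nat.negb_even.
  destruct (Nat.even k); reflexivity.
Qed.

Definition EEqb a b := EIfz (EAdd (ESub a b) (ESub b a)) (EConst 1) (EConst 0).
Lemma denote_EEqb a b env : denote (EEqb a b) env = Nat.b2n (denote a env =? denote b env).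
Proof.
  unfold EEqb. rewrite denote_EIfz, denote_EAdd, !denote_ESub.
  destruct (Nat.eqb_spec (denote a env) (denote b env)).
  - replace (_ + _) with 0 by lia. reflexivity.
  - destruct (_ + _) eqn:E; [lia | reflexivity].
Qed.

Definition ELeb a b := EIfz (ESub a b) (EConst 1) (EConst 0).
Lemma denote_ELeb a b env : denote (ELeb a b) env = Nat.b2n (denote a env <=? denote b env).
Proof.
  unfold ELeb. rewrite denote_EIfz, denote_ESub.
  destruct (Nat.leb_spec (denote a env) (denote b env)).
  - replace (_ - _) with 0 by lia. reflexivity.
  - destruct (_ - _) eqn:E; [lia | reflexivity].
Qed.

Lemma b2n_neq0 b : Nat.b2n b <> 0 <-> b = true.
Proof. destruct b; simpl; intuition congruence. Qed.

Lemma denote_EEqb_neq0 a b env : denote (EEqb a b) env <> 0 <-> denote a env = denote b env.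
Proof. rewrite denote_EEqb, b2n_neq0. apply Nat.eqb_eq. Qed.

Lemma denote_ELeb_neq0 a b env : denote (ELeb a b) env <> 0 <-> denote a env <= denote b env.
Proof. rewrite denote_ELeb, b2n_neq0. apply Nat.leb_le. Qed.

Definition ENot a := EIfz a (EConst 1) (EConst 0).
Lemma denote_ENot a env : denote (ENot a) env <> 0 <-> denote a env = 0.
Proof. unfold ENot. rewrite denote_EIfz. destruct (denote a env); simpl; intuition congruence. Qed.

Definition EAnd a b := EIfz a (EConst 0) (EIfz b (EConst 0) (EConst 1)).
Lemma denote_EAnd a b env :
  denote (EAnd a b) env <> 0 <-> denote a env <> 0 /\ denote b env <> 0.
Proof.
  unfold EAnd. rewrite !denote_EIfz.
  destruct (denote a env), (denote b env); simpl; intuition congruence.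
Qed.

Definition EOr a b := EIfz a b (EConst 1).
Lemma denote_EOr a b env :
  denote (EOr a b) env <> 0 <-> denote a env <> 0 \/ denote b env <> 0.
Proof.
  unfold EOr. rewrite !denote_EIfz.
  destruct (denote a env), (denote b env); simpl; intuition congruence.
Qed.

Definition EExists bound body := ERec bound (EConst 0) (EIfz (EVar 1) (EDrop1 body) (EConst 1)).
Lemma denote_EExists bound body env :
  denote (EExists bound body) env <> 0 <->
  exists i, i < denote bound env /\ denote body (i :: env) <> 0.
Proof.
  unfold EExists.
  cbn [denote nth hd tl]. induction (denote bound env) as [|n IH]; cbn [nat_rect].
  - split; [congruence|]. intros [i [Hi _]]; lia.
  - rewrite denote_EIfz. cbn [denote nth hd tl].
    destruct (nat_rect _ _ _ n); cbn [ifz].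
    + split.
      * intros H. exists n; auto.
      * intros [i [Hi Hp]]. destruct (Nat.eq_dec i n) as [->|Hin]; auto.
        exfalso. apply (proj2 IH); auto. exists i; split; [lia | auto].
    + split; [|congruence]. intros _.
      destruct (proj1 IH) as [i [Hi Hp]]; [congruence|]. exists i; split; auto.
Qed.

Definition EForall bound body := ENot (EExists bound (ENot body)).
Lemma denote_EForall bound body env :
  denote (EForall bound body) env <> 0 <->
  forall i, i < denote bound env -> denote body (i :: env) <> 0.
Proof.
  unfold EForall. rewrite denote_ENot. split.
  - intros H i Hi Hb. revert H. apply denote_EExists.
    exists i. split; auto. apply denote_ENot; auto.
  - intros H. destruct (denote (EExists bound (ENot body)) env) eqn:E; auto. exfalso.
    assert (denote (EExists bound (ENot body)) env <> 0) as [i [Hi Hb]]%denote_EExists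
      by congruence.
    apply denote_ENot in Hb. exact (H i Hi Hb).
Qed.

Fixpoint count_below (n : nat) (p : nat -> nat) : nat :=
  match n with 0 => 0 | S n => count_below n p + Nat.b2n (negb (p n =? 0)) end.

Lemma count_below_ext n p q : (forall i, p i = q i) -> count_below n p = count_below n q.
Proof. intros H; induction n; cbn [count_below]; auto. rewrite IHn, H; auto. Qed.

Lemma count_below_prefix n p s :
  (forall i, p i <> 0 <-> i < s) -> count_below n p = Nat.min n s.
Proof.
  intros H. induction n; [reflexivity|]. cbn [count_below]. rewrite IHn.
  destruct (Nat.eqb_spec (p n) 0) as [E|E]; cbn [negb Nat.b2n].
  - assert (~ n < s) by (intros X; apply H in X; auto). lia.
  - apply H in E. lia.
Qed.

Definition ECount bound body :=
  ERec bound (EConst 0) (EAdd (EVar 1) (EIfz (EDrop1 body) (EConst 0) (EConst 1))).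
Lemma denote_ECount bound body env :
  denote (ECount bound body) env = count_below (denote bound env) (fun i => denote body (i :: env)).
Proof.
  unfold ECount.
  cbn [denote nth hd tl]. induction (denote bound env) as [|n IH]; cbn [nat_rect count_below]; auto.
  rewrite denote_EAdd, denote_EIfz. cbn [denote nth hd tl]. rewrite IH.
  destruct (denote body (n :: env)); reflexivity.
Qed.

(** * Cantor pairing and codes of lists *)

Fixpoint triangle (n : nat) : nat := match n with 0 => 0 | S n => triangle n + S n end.

Lemma triangle_mono i j : i <= j -> triangle i <= triangle j.
Proof. induction 1; simpl; lia. Qed.

Lemma le_triangle n : n <= triangle n.
Proof. induction n; simpl; lia. Qed.

Lemma triangle_bracket z : exists s, triangle s <= z < triangle (S s).
Proof.
  induction z as [|z [s Hs]]; [exists 0; simpl; lia|].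
  destruct (Nat.eq_dec (S z) (triangle (S s))); [exists (S s) | exists s]; simpl in *; lia.
Qed.

Definition cpair x y := triangle (x + y) + y.
Definition cdiag z := count_below z (fun i => Nat.b2n (triangle (S i) <=? z)).
Definition csnd z := z - triangle (cdiag z).
Definition cfst z := cdiag z - csnd z.

Lemma cdiag_spec z s : triangle s <= z < triangle (S s) -> cdiag z = s.
Proof.
  intros Hs. unfold cdiag. rewrite (count_below_prefix _ _ s).
  - pose proof (le_triangle s). lia.
  - intros i. rewrite b2n_neq0, Nat.leb_le. split; intros Hi.
    + destruct (Nat.lt_ge_cases i s); auto. pose proof (triangle_mono (S s) (S i)). lia.
    + pose proof (triangle_mono (S i) s). lia.
Qed.

Lemma cdiag_cpair x y : cdiag (cpair x y) = x + y.
Proof. apply cdiag_spec. unfold cpair. simpl. lia. Qed.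

Lemma cfst_cpair x y : cfst (cpair x y) = x.
Proof. unfold cfst, csnd. rewrite cdiag_cpair. unfold cpair. lia. Qed.

Lemma csnd_cpair x y : csnd (cpair x y) = y.
Proof. unfold csnd. rewrite cdiag_cpair. unfold cpair. lia. Qed.

Lemma cpair_surj z : cpair (cfst z) (csnd z) = z.
Proof.
  destruct (triangle_bracket z) as [s Hs]. pose proof (cdiag_spec z s Hs) as E.
  unfold cpair, cfst, csnd. rewrite E. simpl in Hs.
  replace (s - (z - triangle s) + (z - triangle s)) with s by lia. lia.
Qed.

Lemma csnd_le z : csnd z <= z.
Proof. unfold csnd. lia. Qed.

Lemma le_cpair_r x y : y <= cpair x y.
Proof. unfold cpair. lia. Qed.

Lemma cfst_0 : cfst 0 = 0.
Proof. exact (cfst_cpair 0 0). Qed.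

Lemma csnd_0 : csnd 0 = 0.
Proof. exact (csnd_cpair 0 0). Qed.

Definition ETriangle a := ERec a (EConst 0) (EAdd (EVar 1) (ESucc (EVar 0))).
Lemma denote_ETriangle a env : denote (ETriangle a) env = triangle (denote a env).
Proof.
  unfold ETriangle. cbn [denote]. induction (denote a env); cbn [nat_rect triangle]; auto.
  rewrite denote_EAdd. cbn [denote nth]. lia.
Qed.

Definition ECpair a b := EAdd (ETriangle (EAdd a b)) b.
Lemma denote_ECpair a b env : denote (ECpair a b) env = cpair (denote a env) (denote b env).
Proof. unfold ECpair, cpair. rewrite denote_EAdd, denote_ETriangle, denote_EAdd. reflexivity. Qed.

Definition ECdiag z := ECount z (ELeb (ETriangle (ESucc (EVar 0))) (EDrop z)).
Lemma denote_ECdiag z env : denote (ECdiag z) env = cdiag (denote z env).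
Proof.
  unfold ECdiag, cdiag. rewrite denote_ECount. apply count_below_ext. intros i.
  rewrite denote_ELeb, denote_ETriangle. reflexivity.
Qed.

Definition ECsnd z := ESub z (ETriangle (ECdiag z)).
Lemma denote_ECsnd z env : denote (ECsnd z) env = csnd (denote z env).
Proof. unfold ECsnd, csnd. rewrite denote_ESub, denote_ETriangle, denote_ECdiag. reflexivity. Qed.

Definition ECfst z := ESub (ECdiag z) (ECsnd z).
Lemma denote_ECfst z env : denote (ECfst z) env = cfst (denote z env).
Proof. unfold ECfst, cfst. rewrite denote_ESub, denote_ECsnd, denote_ECdiag. reflexivity. Qed.

Definition cons_code a z := S (cpair a z).
Definition hd_code z := cfst (pred z).
Definition tl_code z := csnd (pred z).
Definition drop_code n z := Nat.iter n tl_code z.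
Definition nth_code i z := hd_code (drop_code i z).
Definition length_code z := count_below z (fun i => drop_code i z).

Fixpoint list_code (l : list nat) : nat :=
  match l with [] => 0 | a :: l => cons_code a (list_code l) end.

Lemma tl_code_cons a l : tl_code (list_code (a :: l)) = list_code l.
Proof. apply csnd_cpair. Qed.

Lemma drop_code_list i l : drop_code i (list_code l) = list_code (skipn i l).
Proof.
  revert l. induction i as [|i IH]; [reflexivity|].
  unfold drop_code in *. intros [|a l]; rewrite Nat.iter_succ_r.
  - replace (tl_code (list_code [])) with (list_code []) by (symmetry; apply csnd_0).
    rewrite IH. destruct i; reflexivity.
  - rewrite tl_code_cons. apply IH.
Qed.

Lemma nth_code_list i l : nth_code i (list_code l) = nth i l 0.
Proof.
  unfold nth_code. rewrite drop_code_list.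
  revert l; induction i; intros [|a l]; simpl; auto; first [apply cfst_0 | apply cfst_cpair].
Qed.

Lemma length_le_list_code l : length l <= list_code l.
Proof.
  induction l as [|a l IH]; simpl; auto.
  unfold cons_code. pose proof (le_cpair_r a (list_code l)). lia.
Qed.

Lemma length_code_list l : length_code (list_code l) = length l.
Proof.
  unfold length_code. rewrite (count_below_prefix _ _ (length l)).
  - pose proof (length_le_list_code l). lia.
  - intros i. rewrite drop_code_list. destruct (Nat.lt_ge_cases i (length l)).
    + split; auto. intros _. destruct (skipn i l) eqn:E; simpl; [|discriminate].
      apply (f_equal (@length nat)) in E. rewrite length_skipn in E. simpl in E. lia.
    + rewrite skipn_all2 by lia. simpl. lia.
Qed.

Lemma list_code_surj z : exists l, list_code l = z.
Proof.
  induction z as [[|z] IH] using lt_wf_ind; [exists []; auto|].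
  destruct (IH (csnd z)) as [l Hl]; [pose proof (csnd_le z); lia|].
  exists (cfst z :: l). simpl. unfold cons_code. rewrite Hl, cpair_surj. reflexivity.
Qed.

Definition ECons a z := ESucc (ECpair a z).
Definition EHd z := ECfst (EPred z).
Definition ETl z := ECsnd (EPred z).
Definition EDropCode n z := ERec n z (ETl (EVar 1)).
Definition ENth i z := EHd (EDropCode i z).
Definition ELength z := ECount z (EDropCode (EVar 0) (EDrop z)).

Lemma denote_ECons a z env : denote (ECons a z) env = cons_code (denote a env) (denote z env).
Proof. unfold ECons, cons_code. cbn [denote]. rewrite denote_ECpair. reflexivity. Qed.

Lemma denote_ETl z env : denote (ETl z) env = tl_code (denote z env).
Proof. unfold ETl, tl_code. rewrite denote_ECsnd, denote_EPred. reflexivity. Qed.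

Lemma denote_EDropCode n z env :
  denote (EDropCode n z) env = drop_code (denote n env) (denote z env).
Proof.
  unfold EDropCode. cbn [denote]. induction (denote n env) as [|k IH]; cbn [nat_rect]; auto.
  rewrite denote_ETl. cbn [denote nth]. unfold drop_code in *. rewrite IH. reflexivity.
Qed.

Lemma denote_ENth i z env : denote (ENth i z) env = nth_code (denote i env) (denote z env).
Proof.
  unfold ENth, EHd, nth_code, hd_code.
  rewrite denote_ECfst, denote_EPred, denote_EDropCode. reflexivity.
Qed.

Lemma denote_ELength z env : denote (ELength z) env = length_code (denote z env).
Proof.
  unfold ELength, length_code. rewrite denote_ECount. apply count_below_ext. intros i.
  rewrite denote_EDropCode. reflexivity.
Qed.

Definition entry c w y h := cpair c (cpair w (cpair y h)).
Definition entry_code z := cfst z.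
Definition entry_input z := cfst (csnd z).
Definition entry_output z := cfst (csnd (csnd z)).
Definition entry_hint z := csnd (csnd (csnd z)).

Lemma entry_code_entry c w y h : entry_code (entry c w y h) = c.
Proof. apply cfst_cpair. Qed.
Lemma entry_input_entry c w y h : entry_input (entry c w y h) = w.
Proof. unfold entry_input, entry. rewrite csnd_cpair. apply cfst_cpair. Qed.
Lemma entry_output_entry c w y h : entry_output (entry c w y h) = y.
Proof. unfold entry_output, entry. rewrite !csnd_cpair. apply cfst_cpair. Qed.
Lemma entry_hint_entry c w y h : entry_hint (entry c w y h) = h.
Proof. unfold entry_hint, entry. rewrite !csnd_cpair. reflexivity. Qed.

Definition EEntryCode z := ECfst z.
Definition EEntryInput z := ECfst (ECsnd z).
Definition EEntryOutput z := ECfst (ECsnd (ECsnd z)).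
Definition EEntryHint z := ECsnd (ECsnd (ECsnd z)).

Lemma denote_EEntryCode z env : denote (EEntryCode z) env = entry_code (denote z env).
Proof. apply denote_ECfst. Qed.
Lemma denote_EEntryInput z env : denote (EEntryInput z) env = entry_input (denote z env).
Proof. unfold EEntryInput. rewrite denote_ECfst, denote_ECsnd. reflexivity. Qed.
Lemma denote_EEntryOutput z env : denote (EEntryOutput z) env = entry_output (denote z env).
Proof. unfold EEntryOutput. rewrite denote_ECfst, !denote_ECsnd. reflexivity. Qed.
Lemma denote_EEntryHint z env : denote (EEntryHint z) env = entry_hint (denote z env).
Proof. unfold EEntryHint. rewrite !denote_ECsnd. reflexivity. Qed.

Global Opaque EAdd EPred ESub EMul EPow2 EIfz EParity EEqb ELeb ENot EAnd EOr EExists EForall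
  ECount ETriangle ECpair ECdiag ECsnd ECfst ECons EHd ETl EDropCode ENth ELength
  EEntryCode EEntryInput EEntryOutput EEntryHint.

(** * Computation traces *)

Fixpoint code_number (c : code) : nat :=
  match c with
  | Zero => cpair 0 0
  | Succ => cpair 1 0
  | Proj i => cpair 2 i
  | Comp f gs => cpair 3 (cpair (code_number f) (list_code (map code_number gs)))
  | Prec f g => cpair 4 (cpair (code_number f) (code_number g))
  | Mu f => cpair 5 (code_number f)
  end.

Lemma nth_map_code_number i gs : nth i (map code_number gs) 0 = code_number (nth i gs Zero).
Proof. exact (map_nth code_number gs Zero i). Qed.

Definition records (c w y x : nat) : Prop :=
  entry_code x = c /\ entry_input x = w /\ entry_output x = y.

Definition recorded (pre : list nat) (c w y : nat) : Prop := Exists (records c w y) pre.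

(* An entry [entry c w y h] claims that the code numbered [c] returns [y] on the input coded
   by [w]; [justified pre] checks this claim against the earlier entries [pre], according to
   the constructor tag [cfst c].  The hint [h] codes the list of intermediate results of a
   composition, and the value at [k] of a primitive recursion evaluated at [S k]. *)
Definition justified (pre : list nat) (e : nat) : Prop :=
  let c := entry_code e in let w := entry_input e in
  let y := entry_output e in let h := entry_hint e in
  let p := csnd c in
  match cfst c with
  | 0 => y = 0
  | 1 => 1 <= length_code w /\ y = S (nth_code 0 w)
  | 2 => p < length_code w /\ y = nth_code p w
  | 3 => length_code h = length_code (csnd p) /\
         (forall i, i < length_code (csnd p) ->
            recorded pre (nth_code i (csnd p)) w (nth_code i h)) /\
         recorded pre (cfst p) h y
  | 4 => 1 <= length_code w /\
         (nth_code 0 w = 0 /\ recorded pre (cfst p) (tl_code w) y \/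
          1 <= nth_code 0 w /\
          recorded pre c (cons_code (pred (nth_code 0 w)) (tl_code w)) h /\
          recorded pre (csnd p) (cons_code (pred (nth_code 0 w)) (cons_code h (tl_code w))) y)
  | 5 => recorded pre p (cons_code y w) 0 /\
         forall l, l < y -> exists z, recorded pre p (cons_code l w) (S z)
  | _ => False
  end.

Definition valid_trace (L : list nat) : Prop :=
  forall i, i < length L -> justified (firstn i L) (nth i L 0).

Lemma evals_of_nth gs v ws :
  length ws = length gs ->
  (forall i, i < length gs -> eval (nth i gs Zero) v (nth i ws 0)) -> evals gs v ws.
Proof.
  revert ws; induction gs as [|g gs IH]; intros [|w ws] Hl H; simpl in *; try lia.
  - constructor.
  - constructor; [apply (H 0); lia|].
    apply IH; [lia|]. intros i Hi. apply (H (S i)). lia.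
Qed.

Lemma justified_eval pre e c v :
  (forall c' v' y', recorded pre (code_number c') (list_code v') y' -> eval c' v' y') ->
  justified pre e -> entry_code e = code_number c -> entry_input e = list_code v ->
  eval c v (entry_output e).
Proof.
  intros IH J Hc Hv. unfold justified in J. rewrite Hc, Hv in J.
  destruct (list_code_surj (entry_hint e)) as [ws Hws]. rewrite <- Hws in J.
  set (y := entry_output e) in *. clearbody y.
  destruct c as [| |i|f gs|f g|f]; cbn [code_number] in J; rewrite ?cfst_cpair, ?csnd_cpair in J.
  - rewrite J. constructor.
  - rewrite length_code_list, nth_code_list in J.
    destruct v as [|x v]; simpl in J; [lia|]. destruct J as [_ ->]. constructor.
  - rewrite length_code_list, nth_code_list in J. destruct J as [Hi ->]. constructor. exact Hi.
  - rewrite !length_code_list, length_map in J. destruct J as [Hl [Hgs Hf]].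
    rewrite cfst_cpair in Hf. apply eComp with (ws := ws); [|apply IH, Hf].
    apply evals_of_nth; auto. intros i Hi. apply IH.
    specialize (Hgs i Hi). rewrite !nth_code_list, nth_map_code_number in Hgs. exact Hgs.
  - rewrite length_code_list, nth_code_list in J.
    destruct v as [|[|k] v]; cbn [length nth pred] in J; [lia| |];
      rewrite tl_code_cons in J.
    + destruct J as [_ [[_ Hf]|[Hk _]]]; [|lia].
      constructor. apply IH. rewrite cfst_cpair in Hf. exact Hf.
    + destruct J as [_ [[Hk _]|[_ [Hrec Hg]]]]; [lia|].
      econstructor; apply IH; [exact Hrec | exact Hg].
  - destruct J as [Hf Hlt]. constructor.
    + apply IH, Hf.
    + intros l Hl. destruct (Hlt l Hl) as [z Hz]. exists z. apply IH, Hz.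
Qed.

Lemma Exists_firstn_nth (P : nat -> Prop) L i :
  i <= length L -> Exists P (firstn i L) <-> exists j, j < i /\ P (nth j L 0).
Proof.
  intros Hi. rewrite Exists_exists. split.
  - intros [x [Hx HP]]. apply (In_nth _ _ 0) in Hx as [j [Hj <-]].
    rewrite length_firstn in Hj. rewrite nth_firstn in HP.
    destruct (Nat.ltb_spec j i); [exists j; auto | lia].
  - intros [j [Hj HP]]. exists (nth j (firstn i L) 0). split.
    + apply nth_In. rewrite length_firstn. lia.
    + rewrite nth_firstn. destruct (Nat.ltb_spec j i); [exact HP | lia].
Qed.

Theorem trace_sound L c v y :
  valid_trace L -> recorded L (code_number c) (list_code v) y -> eval c v y.
Proof.
  intros HL Hrec.
  enough (H : forall i, i < length L -> forall c v y,
             records (code_number c) (list_code v) y (nth i L 0) -> eval c v y).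
  { unfold recorded in Hrec. rewrite <- (firstn_all L) in Hrec.
    apply Exists_firstn_nth in Hrec as [i [Hi Hx]]; [|lia].
    exact (H i Hi c v y Hx). }
  induction i as [i IH] using lt_wf_ind. intros Hi c' v' y' [Hc [Hv <-]].
  apply (justified_eval (firstn i L)); auto.
  intros c'' v'' y'' Hr. apply Exists_firstn_nth in Hr as [j [Hj Hx]]; [|lia].
  apply (IH j Hj); [lia | exact Hx].
Qed.

Definition traceable (c : code) (v : list nat) (y : nat) : Prop :=
  exists L, valid_trace L /\ recorded L (code_number c) (list_code v) y.

Lemma justified_mono pre pre' e : incl pre pre' -> justified pre e -> justified pre' e.
Proof.
  intros Hincl. assert (R : forall c w y, recorded pre c w y -> recorded pre' c w y)
    by (intros c w y; apply incl_Exists, Hincl).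
  unfold justified. destruct (cfst _) as [|[|[|[|[|[|]]]]]]; auto.
  - intros [Hl [Hgs Hf]]. split; [|split]; auto.
  - intros [Hl [[Hz Hf]|[Hs [Hr Hg]]]]; split; auto; right; auto.
  - intros [Hf Hlt]. split; auto. intros l Hl. destruct (Hlt l Hl); eauto.
Qed.

Lemma valid_trace_nil : valid_trace [].
Proof. intros i Hi. simpl in Hi. lia. Qed.

Lemma valid_trace_app L1 L2 : valid_trace L1 -> valid_trace L2 -> valid_trace (L1 ++ L2).
Proof.
  intros H1 H2 i Hi. rewrite length_app in Hi. rewrite firstn_app.
  destruct (Nat.lt_ge_cases i (length L1)).
  - rewrite app_nth1 by auto. replace (i - length L1) with 0 by lia.
    rewrite app_nil_r. auto.
  - rewrite app_nth2, firstn_all2 by auto.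
    apply justified_mono with (firstn (i - length L1) L2); [apply incl_appr, incl_refl|].
    apply H2. lia.
Qed.

Lemma valid_trace_snoc L e : valid_trace L -> justified L e -> valid_trace (L ++ [e]).
Proof.
  intros HL He i Hi. rewrite length_app in Hi. simpl in Hi. rewrite firstn_app.
  destruct (Nat.lt_ge_cases i (length L)).
  - rewrite app_nth1 by auto. replace (i - length L) with 0 by lia.
    rewrite app_nil_r. auto.
  - replace i with (length L) by lia.
    rewrite app_nth2, firstn_all, Nat.sub_diag by auto. simpl. rewrite app_nil_r. exact He.
Qed.

Lemma recorded_app_l L1 L2 c w y : recorded L1 c w y -> recorded (L1 ++ L2) c w y.
Proof. intros H. apply Exists_app. auto. Qed.

Lemma recorded_app_r L1 L2 c w y : recorded L2 c w y -> recorded (L1 ++ L2) c w y.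
Proof. intros H. apply Exists_app. auto. Qed.

Lemma traceable_extend L c v y h :
  valid_trace L -> justified L (entry (code_number c) (list_code v) y h) -> traceable c v y.
Proof.
  intros HL He. exists (L ++ [entry (code_number c) (list_code v) y h]). split.
  - apply valid_trace_snoc; auto.
  - apply recorded_app_r, Exists_cons_hd. unfold records.
    rewrite entry_code_entry, entry_input_entry, entry_output_entry. auto.
Qed.

Lemma traceable_collect n (c : nat -> code) (v : nat -> list nat) (Q : nat -> nat -> Prop) :
  (forall l, l < n -> exists y, traceable (c l) (v l) y /\ Q l y) ->
  exists L, valid_trace L /\
    forall l, l < n -> exists y, recorded L (code_number (c l)) (list_code (v l)) y /\ Q l y.
Proof.
  induction n as [|n IH]; intros H.
  - exists []. split; [exact valid_trace_nil | intros; lia].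
  - destruct IH as [L1 [HL1 H1]]; [intros l Hl; apply H; lia|].
    destruct (H n) as [y [[L2 [HL2 H2]] HQ]]; [lia|].
    exists (L1 ++ L2). split; [apply valid_trace_app; auto|].
    intros l Hl. destruct (Nat.eq_dec l n) as [->|Hln].
    + exists y. split; auto. apply recorded_app_r, H2.
    + destruct (H1 l) as [y' [Hy' HQ']]; [lia|]. exists y'. split; auto.
      apply recorded_app_l, Hy'.
Qed.

Ltac unfold_justified :=
  unfold justified; cbv zeta;
  rewrite entry_code_entry, entry_input_entry, entry_output_entry, entry_hint_entry;
  cbn [code_number]; repeat rewrite ?cfst_cpair, ?csnd_cpair.

Lemma traceable_Comp f gs v ws y :
  length ws = length gs ->
  (forall i, i < length gs -> traceable (nth i gs Zero) v (nth i ws 0)) ->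
  traceable f ws y -> traceable (Comp f gs) v y.
Proof.
  intros Hlen Hgs [L2 [HL2 Hf]].
  destruct (traceable_collect (length gs) (fun i => nth i gs Zero) (fun _ => v)
              (fun i y => y = nth i ws 0)) as [L1 [HL1 H1]].
  { intros i Hi. exists (nth i ws 0). auto. }
  apply (traceable_extend (L1 ++ L2) _ _ _ (list_code ws)); [apply valid_trace_app; auto|].
  unfold_justified. rewrite !length_code_list, length_map. split; [exact Hlen|]. split.
  - intros i Hi. rewrite !nth_code_list.
    destruct (H1 i Hi) as [y' [Hy' ->]]. apply recorded_app_l.
    rewrite nth_map_code_number. exact Hy'.
  - apply recorded_app_r, Hf.
Qed.

Lemma traceable_Prec_0 f g v y : traceable f v y -> traceable (Prec f g) (0 :: v) y.
Proof.
  intros [L [HL Hf]]. apply (traceable_extend L _ _ _ 0); auto.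
  unfold_justified. rewrite length_code_list, nth_code_list, tl_code_cons. simpl.
  split; [lia|]. left. split; auto.
Qed.

Lemma traceable_Prec_S f g k v r y :
  traceable (Prec f g) (k :: v) r -> traceable g (k :: r :: v) y ->
  traceable (Prec f g) (S k :: v) y.
Proof.
  intros [L1 [HL1 Hrec]] [L2 [HL2 Hg]].
  apply (traceable_extend (L1 ++ L2) _ _ _ r); [apply valid_trace_app; auto|].
  unfold_justified. rewrite length_code_list, nth_code_list, tl_code_cons. simpl.
  split; [lia|]. right. split; [lia|]. split.
  - apply recorded_app_l, Hrec.
  - apply recorded_app_r, Hg.
Qed.

Lemma traceable_Mu f v k :
  traceable f (k :: v) 0 -> (forall l, l < k -> exists z, traceable f (l :: v) (S z)) ->
  traceable (Mu f) v k.
Proof.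
  intros [L1 [HL1 Hf]] Hlt.
  destruct (traceable_collect k (fun _ => f) (fun l => l :: v) (fun _ y => exists z, y = S z))
    as [L2 [HL2 H2]].
  { intros l Hl. destruct (Hlt l Hl) as [z Hz]. eauto. }
  apply (traceable_extend (L1 ++ L2) _ _ _ 0); [apply valid_trace_app; auto|].
  unfold_justified. split.
  - apply recorded_app_l, Hf.
  - intros l Hl. destruct (H2 l Hl) as [y [Hy [z ->]]]. exists z. apply recorded_app_r, Hy.
Qed.

Lemma evals_nth gs v ws :
  evals gs v ws -> length ws = length gs /\
  forall i, i < length gs -> eval (nth i gs Zero) v (nth i ws 0).
Proof.
  induction 1 as [|g gs v y ys Hg _ [Hl IH]]; simpl; split; auto; try lia.
  intros [|i] Hi; auto. apply IH. lia.
Qed.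

Theorem trace_complete c v y : eval c v y -> traceable c v y.
Proof.
  revert v y.
  induction c as [| |j|f gs IHf IHgs|f g IHf IHg|f IHf] using code_nested_ind;
    intros v y Hev.
  - inversion Hev; subst.
    apply (traceable_extend [] _ _ _ 0); [exact valid_trace_nil|].
    unfold_justified. reflexivity.
  - inversion Hev; subst.
    apply (traceable_extend [] _ _ _ 0); [exact valid_trace_nil|].
    unfold_justified. rewrite length_code_list, nth_code_list. simpl. split; [lia | reflexivity].
  - inversion Hev; subst.
    apply (traceable_extend [] _ _ _ 0); [exact valid_trace_nil|].
    unfold_justified. rewrite length_code_list, nth_code_list. auto.
  - inversion Hev as [| | |f' gs' v' ws y' Hgs Hf| | |]; subst.
    destruct (evals_nth _ _ _ Hgs) as [Hl Hnth].
    apply (traceable_Comp f gs v ws y Hl); [|apply IHf, Hf].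
    intros i Hi. rewrite Forall_forall in IHgs. apply IHgs; auto. apply nth_In, Hi.
  - destruct v as [|k v]; [inversion Hev|]. revert y Hev.
    induction k as [|k IHk]; intros y Hev; inversion Hev; subst.
    + apply traceable_Prec_0, IHf. assumption.
    + eapply traceable_Prec_S; [apply IHk | apply IHg]; eassumption.
  - inversion Hev as [| | | | | |f' v' k Hk Hlt]; subst.
    apply traceable_Mu; [apply IHf, Hk|].
    intros l Hl. destruct (Hlt l Hl) as [z Hz]. exists z. apply IHf, Hz.
Qed.

(** * Checking traces, and an undecidable semi-decidable predicate *)

Definition ERecords trace c w y :=
  EAnd (EEqb (EEntryCode (ENth (EVar 0) (EDrop trace))) (EDrop c))
    (EAnd (EEqb (EEntryInput (ENth (EVar 0) (EDrop trace))) (EDrop w))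
          (EEqb (EEntryOutput (ENth (EVar 0) (EDrop trace))) (EDrop y))).

Definition ERecordsPos trace c w :=
  EAnd (EEqb (EEntryCode (ENth (EVar 0) (EDrop trace))) (EDrop c))
    (EAnd (EEqb (EEntryInput (ENth (EVar 0) (EDrop trace))) (EDrop w))
          (ELeb (EConst 1) (EEntryOutput (ENth (EVar 0) (EDrop trace))))).

Definition EFound bound trace c w y := EExists bound (ERecords trace c w y).
Definition EFoundPos bound trace c w := EExists bound (ERecordsPos trace c w).

Section FoundInTrace.
Variables (bound trace c w : expr) (env L : list nat).
Hypothesis trace_env : denote trace env = list_code L.
Hypothesis bound_env : denote bound env <= length L.

Lemma denote_EFound y :
  denote (EFound bound trace c w y) env <> 0 <->
  recorded (firstn (denote bound env) L) (denote c env) (denote w env) (denote y env).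
Proof.
  unfold EFound, recorded. rewrite denote_EExists, Exists_firstn_nth by exact bound_env.
  unfold ERecords, records.
  split; intros [j [Hj H]]; exists j; split; auto; revert H;
    rewrite !denote_EAnd, !denote_EEqb_neq0, denote_EEntryCode, denote_EEntryInput,
      denote_EEntryOutput, denote_ENth; cbn [denote nth tl]; rewrite trace_env, nth_code_list;
    tauto.
Qed.

Lemma denote_EFoundPos :
  denote (EFoundPos bound trace c w) env <> 0 <->
  exists z, recorded (firstn (denote bound env) L) (denote c env) (denote w env) (S z).
Proof.
  unfold EFoundPos, recorded. rewrite denote_EExists. unfold ERecordsPos, records.
  setoid_rewrite Exists_firstn_nth; [|exact bound_env].
  split.
  - intros [j [Hj H]]. revert H.
    rewrite !denote_EAnd, !denote_EEqb_neq0, denote_ELeb_neq0, denote_EEntryCode,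
      denote_EEntryInput, denote_EEntryOutput, denote_ENth; cbn [denote nth tl].
    rewrite trace_env, nth_code_list. intros [Hc [Hw Hy]].
    exists (pred (entry_output (nth j L 0))), j. split; auto. split; auto. split; auto. lia.
  - intros [z [j [Hj [Hc [Hw Hy]]]]]. exists j. split; auto.
    rewrite !denote_EAnd, !denote_EEqb_neq0, denote_ELeb_neq0, denote_EEntryCode,
      denote_EEntryInput, denote_EEntryOutput, denote_ENth; cbn [denote nth tl].
    rewrite trace_env, nth_code_list. repeat split; auto. lia.
Qed.
End FoundInTrace.

Lemma tag_cases t (B0 B1 B2 B3 B4 B5 : Prop) :
  (t = 0 /\ B0) \/ (t = 1 /\ B1) \/ (t = 2 /\ B2) \/ (t = 3 /\ B3) \/ (t = 4 /\ B4) \/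
  (t = 5 /\ B5) <->
  match t with 0 => B0 | 1 => B1 | 2 => B2 | 3 => B3 | 4 => B4 | 5 => B5 | _ => False end.
Proof. destruct t as [|[|[|[|[|[|t]]]]]]; intuition (try discriminate). Qed.

Definition EEntry := ENth (EVar 0) (EVar 1).
Definition ECode := EEntryCode EEntry.
Definition EInput := EEntryInput EEntry.
Definition EOutput := EEntryOutput EEntry.
Definition EHint := EEntryHint EEntry.
Definition EArg := ECsnd ECode.
Definition EHead := ENth (EConst 0) EInput.
Definition EFoundBefore c w y := EFound (EVar 0) (EVar 1) c w y.

Definition EJustZero := EEqb EOutput (EConst 0).
Definition EJustSucc := EAnd (ELeb (EConst 1) (ELength EInput)) (EEqb EOutput (ESucc EHead)).
Definition EJustProj := EAnd (ELeb (ESucc EArg) (ELength EInput)) (EEqb EOutput (ENth EArg EInput)).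
Definition EArgRecorded :=
  EFound (EDrop (EVar 0)) (EDrop (EVar 1)) (ENth (EVar 0) (EDrop (ECsnd EArg)))
    (EDrop EInput) (ENth (EVar 0) (EDrop EHint)).
Definition EJustComp :=
  EAnd (EEqb (ELength EHint) (ELength (ECsnd EArg)))
    (EAnd (EForall (ELength (ECsnd EArg)) EArgRecorded)
          (EFoundBefore (ECfst EArg) EHint EOutput)).
Definition EJustPrec :=
  EAnd (ELeb (EConst 1) (ELength EInput))
    (EOr (EAnd (EEqb EHead (EConst 0)) (EFoundBefore (ECfst EArg) (ETl EInput) EOutput))
         (EAnd (ELeb (EConst 1) EHead)
            (EAnd (EFoundBefore ECode (ECons (EPred EHead) (ETl EInput)) EHint)
                  (EFoundBefore (ECsnd EArg) (ECons (EPred EHead) (ECons EHint (ETl EInput)))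
                     EOutput)))).
Definition EBelowPositive :=
  EFoundPos (EDrop (EVar 0)) (EDrop (EVar 1)) (EDrop EArg) (ECons (EVar 0) (EDrop EInput)).
Definition EJustMu :=
  EAnd (EFoundBefore EArg (ECons EOutput EInput) (EConst 0)) (EForall EOutput EBelowPositive).

Definition EJustified :=
  let tagged t clause := EAnd (EEqb (ECfst ECode) (EConst t)) clause in
  EOr (tagged 0 EJustZero) (EOr (tagged 1 EJustSucc) (EOr (tagged 2 EJustProj)
    (EOr (tagged 3 EJustComp) (EOr (tagged 4 EJustPrec) (tagged 5 EJustMu))))).

Section JustifiedEntry.
Variables (L r : list nat) (i : nat).
Hypothesis i_lt : i < length L.
Let env := i :: list_code L :: r.
Let e := nth i L 0.

Lemma denote_EEntry : denote EEntry env = e.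
Proof. unfold EEntry. rewrite denote_ENth. apply nth_code_list. Qed.

Ltac denote_entry :=
  unfold EArg, EHead; unfold ECode, EInput, EOutput, EHint;
  repeat progress (cbn [denote nth tl];
    rewrite ?denote_EEntry, ?denote_EEntryCode, ?denote_EEntryInput, ?denote_EEntryOutput,
      ?denote_EEntryHint, ?denote_ENth, ?denote_ECsnd, ?denote_ECfst, ?denote_ELength).

Lemma denote_EFoundBefore c w y :
  denote (EFoundBefore c w y) env <> 0 <->
  recorded (firstn i L) (denote c env) (denote w env) (denote y env).
Proof. apply (denote_EFound (EVar 0) (EVar 1)); cbn; [reflexivity | lia]. Qed.

Lemma denote_EFoundBefore_under j c w y :
  denote (EFound (EDrop (EVar 0)) (EDrop (EVar 1)) c w y) (j :: env) <> 0 <->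
  recorded (firstn i L) (denote c (j :: env)) (denote w (j :: env)) (denote y (j :: env)).
Proof. apply (denote_EFound (EDrop (EVar 0)) (EDrop (EVar 1))); cbn; [reflexivity | lia]. Qed.

Lemma denote_EFoundPos_under j c w :
  denote (EFoundPos (EDrop (EVar 0)) (EDrop (EVar 1)) c w) (j :: env) <> 0 <->
  exists z, recorded (firstn i L) (denote c (j :: env)) (denote w (j :: env)) (S z).
Proof. apply (denote_EFoundPos (EDrop (EVar 0)) (EDrop (EVar 1))); cbn; [reflexivity | lia]. Qed.

Lemma denote_EJustComp :
  denote EJustComp env <> 0 <->
  length_code (entry_hint e) = length_code (csnd (csnd (entry_code e))) /\
  (forall j, j < length_code (csnd (csnd (entry_code e))) ->
     recorded (firstn i L) (nth_code j (csnd (csnd (entry_code e)))) (entry_input e)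
       (nth_code j (entry_hint e))) /\
  recorded (firstn i L) (cfst (csnd (entry_code e))) (entry_hint e) (entry_output e).
Proof.
  unfold EJustComp. rewrite !denote_EAnd, denote_EEqb_neq0, denote_EForall, denote_EFoundBefore.
  denote_entry.
  assert (Hbody : forall j, denote EArgRecorded (j :: env) <> 0 <->
    recorded (firstn i L) (nth_code j (csnd (csnd (entry_code e)))) (entry_input e)
      (nth_code j (entry_hint e))).
  { intros j. unfold EArgRecorded. rewrite denote_EFoundBefore_under. denote_entry. reflexivity. }
  split; intros [H1 [H2 H3]]; (split; [assumption|]); (split; [|assumption]);
    intros j Hj; apply Hbody, H2, Hj.
Qed.
Lemma denote_EJustMu :
  denote EJustMu env <> 0 <->
  recorded (firstn i L) (csnd (entry_code e)) (cons_code (entry_output e) (entry_input e)) 0 /\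
  forall l, l < entry_output e ->
    exists z, recorded (firstn i L) (csnd (entry_code e)) (cons_code l (entry_input e)) (S z).
Proof.
  unfold EJustMu. rewrite denote_EAnd, denote_EFoundBefore, denote_EForall, denote_ECons.
  assert (Hbody : forall l, denote EBelowPositive (l :: env) <> 0 <->
    exists z, recorded (firstn i L) (csnd (entry_code e)) (cons_code l (entry_input e)) (S z)).
  { intros l. unfold EBelowPositive. rewrite denote_EFoundPos_under, denote_ECons.
    denote_entry. reflexivity. }
  denote_entry. cbn [denote].
  split; intros [H1 H2]; (split; [assumption|]); intros l Hl; apply Hbody, H2, Hl.
Qed.

Lemma denote_EJustified : denote EJustified env <> 0 <-> justified (firstn i L) e.
Proof.
  unfold EJustified. rewrite !denote_EOr, !denote_EAnd, !denote_EEqb_neq0. cbn [denote].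
  rewrite tag_cases.
  replace (denote (ECfst ECode) env) with (cfst (entry_code e)) by (denote_entry; reflexivity).
  unfold justified. cbv zeta.
  destruct (cfst (entry_code e)) as [|[|[|[|[|[|t]]]]]]; try reflexivity.
  - unfold EJustZero. rewrite denote_EEqb_neq0. denote_entry. reflexivity.
  - unfold EJustSucc. rewrite denote_EAnd, denote_ELeb_neq0, denote_EEqb_neq0.
    denote_entry. reflexivity.
  - unfold EJustProj. rewrite denote_EAnd, denote_ELeb_neq0, denote_EEqb_neq0.
    denote_entry. reflexivity.
  - apply denote_EJustComp.
  - unfold EJustPrec.
    rewrite !denote_EAnd, denote_EOr, !denote_EAnd, denote_ELeb_neq0, denote_EEqb_neq0,
      denote_ELeb_neq0, !denote_EFoundBefore, !denote_ECons, !denote_EPred, !denote_ETl.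
    denote_entry. reflexivity.
  - apply denote_EJustMu.
Qed.
End JustifiedEntry.

Definition EValid := EForall (ELength (EVar 0)) EJustified.
Definition EWitness :=
  EFound (ELength (EVar 0)) (EVar 0) (EVar 1) (ECons (EVar 1) (EConst 0)) (EConst 0).
Definition ETrace := EAnd EValid EWitness.

Lemma denote_EValid L r : denote EValid (list_code L :: r) <> 0 <-> valid_trace L.
Proof.
  unfold EValid. rewrite denote_EForall, denote_ELength. cbn [denote nth].
  rewrite length_code_list.
  split; intros H i Hi; apply (denote_EJustified L r i Hi); auto.
Qed.

Lemma denote_EWitness L k r :
  denote EWitness (list_code L :: k :: r) <> 0 <-> recorded L k (list_code [k]) 0.
Proof.
  unfold EWitness. rewrite (denote_EFound _ _ _ _ _ L); cbn [denote nth].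
  - rewrite denote_ELength, denote_ECons. cbn [denote nth].
    rewrite length_code_list, firstn_all. reflexivity.
  - reflexivity.
  - rewrite denote_ELength. cbn [denote nth]. rewrite length_code_list. reflexivity.
Qed.

Lemma denote_ETrace L k r :
  denote ETrace (list_code L :: k :: r) <> 0 <-> valid_trace L /\ recorded L k (list_code [k]) 0.
Proof. unfold ETrace. rewrite denote_EAnd, denote_EValid, denote_EWitness. reflexivity. Qed.

Definition returns_zero_on_self (k : nat) : Prop :=
  exists L, valid_trace L /\ recorded L k (list_code [k]) 0.

Theorem returns_zero_on_self_undecidable :
  ~ exists delta, recursive 1 delta /\ forall k, returns_zero_on_self k <-> delta [k] <> 0.
Proof.
  intros [delta [[c Hc] Hdelta]]. set (k := code_number c).
  assert (Hk : eval c [k] (delta [k])) by (apply Hc; reflexivity).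
  destruct (Nat.eq_dec (delta [k]) 0) as [E|E].
  - apply (Hdelta k); [|exact E]. rewrite E in Hk. exact (trace_complete _ _ _ Hk).
  - apply E. apply Hdelta in E as [L [HL Hrec]].
    apply (eval_deterministic c [k]); [exact Hk|]. exact (trace_sound L c [k] 0 HL Hrec).
Qed.

Open Scope R_scope.

(** * A computable sequence with undecidable positivity *)

Lemma qof_0 a b : qof 0 a b = INR a / INR (S b).
Proof. unfold qof. simpl. lra. Qed.

Lemma half_pow_pos t : 0 < (/ 2) ^ t.
Proof. apply pow_lt. lra. Qed.

Lemma half_pow_le t N : (N <= t)%nat -> (/ 2) ^ t <= (/ 2) ^ N.
Proof.
  intros H. rewrite !pow_inv. apply Rinv_le_contravar; [apply pow_lt; lra|].
  apply Rle_pow; [lra | exact H].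
Qed.

Section FirstHitDecay.
Variable T : expr.
Hypothesis T_local : forall t k r, denote T (t :: k :: r) <> 0%nat <-> denote T [t; k] <> 0%nat.

Definition hit (k t : nat) : Prop := denote T [t; k] <> 0%nat.

Definition hit_dec k t : {hit k t} + {~ hit k t} :=
  match Nat.eq_dec (denote T [t; k]) 0 with
  | left E => right (fun H => H E)
  | right H => left H
  end.

Definition decay (k : nat) : R :=
  match excluded_middle_informative (exists t, hit k t) with
  | left H => (/ 2) ^ proj1_sig (epsilon_smallest (hit k) (hit_dec k) H)
  | right _ => 0
  end.

Lemma decay_first_hit k t :
  hit k t -> (forall t', (t' < t)%nat -> ~ hit k t') -> decay k = (/ 2) ^ t.
Proof.
  intros Ht Hbefore. unfold decay.
  destruct (excluded_middle_informative _) as [H|H]; [|exfalso; eauto].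
  destruct (epsilon_smallest _ _ H) as [t0 [Ht0 Hmin]]. simpl. f_equal.
  specialize (Hmin t Ht). destruct (Nat.lt_ge_cases t0 t); [exfalso; eapply Hbefore; eauto | lia].
Qed.

Lemma decay_no_hit k : ~ (exists t, hit k t) -> decay k = 0.
Proof. intros H. unfold decay. destruct (excluded_middle_informative _); tauto. Qed.

Lemma first_hit k : (exists t, hit k t) ->
  exists t, hit k t /\ forall t', (t' < t)%nat -> ~ hit k t'.
Proof.
  intros H. destruct (epsilon_smallest _ (hit_dec k) H) as [t [Ht Hmin]].
  exists t. split; auto. intros t' Ht' Hh. specialize (Hmin t' Hh). lia.
Qed.

Lemma decay_pos_iff k : 0 < decay k <-> exists t, hit k t.
Proof.
  split.
  - intros Hpos. apply NNPP. intros H. rewrite decay_no_hit in Hpos; auto. lra.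
  - intros H. destruct (first_hit k H) as [t [Ht Hmin]].
    rewrite (decay_first_hit k t); auto. apply half_pow_pos.
Qed.

Lemma decay_nonneg k : 0 <= decay k.
Proof.
  destruct (classic (exists t, hit k t)) as [H|H].
  - apply Rlt_le, decay_pos_iff, H.
  - rewrite decay_no_hit; auto. lra.
Qed.

Lemma decay_no_hit_below k J : (forall t, (t < J)%nat -> ~ hit k t) -> decay k <= (/ 2) ^ J.
Proof.
  intros HJ. destruct (classic (exists t, hit k t)) as [H|H].
  - destruct (first_hit k H) as [t [Ht Hmin]]. rewrite (decay_first_hit k t); auto.
    apply half_pow_le. destruct (Nat.lt_ge_cases t J); [exfalso; eapply HJ; eauto | lia].
  - rewrite decay_no_hit; auto. apply Rlt_le, half_pow_pos.
Qed.

Definition EHitBefore := EExists (EVar 1) T.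
Definition EFirstHit := ECount (EVar 1) (ENot (EExists (ESucc (EVar 0)) (EDrop1 T))).

Lemma denote_EHitBefore k J :
  denote EHitBefore [k; J] <> 0%nat <-> exists t, (t < J)%nat /\ hit k t.
Proof.
  unfold EHitBefore. rewrite denote_EExists. cbn [denote nth].
  split; intros [t [Ht H]]; exists t; split; auto; apply (T_local t k [J]), H.
Qed.

Lemma denote_EFirstHit k J t :
  hit k t -> (forall t', (t' < t)%nat -> ~ hit k t') -> (t < J)%nat ->
  denote EFirstHit [k; J] = t.
Proof.
  intros Ht Hmin HtJ. unfold EFirstHit. rewrite denote_ECount. cbn [denote nth].
  rewrite (count_below_prefix _ _ t); [lia|]. intros t'. rewrite denote_ENot.
  set (d := denote (EExists (ESucc (EVar 0)) (EDrop1 T)) [t'; k; J]).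
  assert (Hex : d <> 0%nat <-> exists t'', (t'' < S t')%nat /\ hit k t'').
  { unfold d. rewrite denote_EExists. cbn [denote nth hd tl].
    split; intros [t'' [H1 H2]]; exists t''; split; auto; apply (T_local t'' k [J]), H2. }
  split.
  - intros H0. destruct (Nat.lt_ge_cases t' t) as [|Hge]; auto. exfalso.
    apply Hex; [exists t; split; [lia | exact Ht] | exact H0].
  - intros Hlt. destruct (Nat.eq_dec d 0) as [|Hnz]; [assumption|].
    apply Hex in Hnz as [t'' [H1 H2]]. exfalso. apply (Hmin t''); auto. lia.
Qed.

Lemma INR_pow2_pred t : INR (S (Nat.pred (2 ^ t))) = 2 ^ t.
Proof.
  assert (2 ^ t <> 0)%nat by (apply Nat.pow_nonzero; lia).
  replace (S (Nat.pred (2 ^ t))) with (2 ^ t)%nat by lia.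
  rewrite pow_INR. reflexivity.
Qed.

Lemma decay_family : comp_family 1 (fun _ => True) (fun v => decay (nth 0 v 0%nat)).
Proof.
  (* At precision J, a hit below J gives the exact value 1 / 2^t; otherwise 0 is within
     2^-J of the sequence. *)
  exists (denote (EConst 0)), (denote (EIfz EHitBefore (EConst 0) (EConst 1))),
    (denote (EPred (EPow2 EFirstHit))), (denote (EVar 1)).
  repeat split; try apply denote_recursive.
  intros [|k [|]] Hv _ N J HJ; simpl in Hv; try lia. cbn [app denote nth] in HJ |- *.
  rewrite qof_0, denote_EIfz.
  destruct (Nat.eq_dec (denote EHitBefore [k; J]) 0) as [E|E].
  - rewrite E, Rdiv_0_l, Rminus_0_r, Rabs_right by (apply Rle_ge, decay_nonneg).
    apply Rle_trans with ((/ 2) ^ J); [|apply half_pow_le; exact HJ].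
    apply decay_no_hit_below. intros t Ht Hh. revert E. apply denote_EHitBefore. eauto.
  - destruct (proj1 (denote_EHitBefore k J) E) as [t' [Ht'J Ht']].
    destruct (first_hit k (ex_intro _ t' Ht')) as [t [Ht Hmin]].
    assert (HtJ : (t < J)%nat).
    { destruct (Nat.lt_ge_cases t J); auto. exfalso. apply (Hmin t'); auto. lia. }
    rewrite denote_EPred, denote_EPow2, (denote_EFirstHit k J t), INR_pow2_pred,
      (decay_first_hit k t); auto.
    destruct (denote EHitBefore [k; J]); [congruence|]. cbn [ifz denote INR].
    rewrite pow_inv, Rdiv_1_l, Rminus_diag, Rabs_R0. apply Rlt_le, half_pow_pos.
Qed.
End FirstHitDecay.

Lemma ETrace_local t k r : denote ETrace (t :: k :: r) <> 0%nat <-> denote ETrace [t; k] <> 0%nat.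
Proof. destruct (list_code_surj t) as [L <-]. rewrite !denote_ETrace. reflexivity. Qed.

Lemma returns_zero_on_self_iff_decay_pos k : returns_zero_on_self k <-> 0 < decay ETrace k.
Proof.
  rewrite decay_pos_iff. unfold hit. split.
  - intros [L HL]. exists (list_code L). apply denote_ETrace, HL.
  - intros [t Ht]. destruct (list_code_surj t) as [L <-]. exists L.
    apply (denote_ETrace L k []), Ht.
Qed.

Lemma comp_family_ext k dom f g :
  (forall v, length v = k -> dom v -> f v = g v) -> comp_family k dom f -> comp_family k dom g.
Proof.
  intros E [s [a [b [e [Hs [Ha [Hb [He H]]]]]]]].
  exists s, a, b, e. repeat split; auto. intros v Hv Hd. rewrite <- E by auto. auto.
Qed.

Lemma firstn_nths (u : list nat) k :
  (k <= length u)%nat -> firstn k u = map (fun i => nth i u 0%nat) (seq 0 k).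
Proof.
  revert u. induction k as [|k IH]; intros [|a u] Hk; simpl in *; try (lia || reflexivity).
  rewrite <- seq_shift, List.map_map, IH by lia. reflexivity.
Qed.

Lemma recursive_firstn k h : recursive k h -> recursive (S k) (fun u => h (firstn k u)).
Proof.
  intros Hh. eapply recursive_ext.
  - apply (recursive_reindex k (S k) h (seq 0 k) Hh), length_seq.
  - intros u Hu. rewrite firstn_nths by lia. reflexivity.
Qed.

Lemma comp_family_reindex k k' dom dom' f (g : list (list nat -> nat)) :
  length g = k -> Forall (recursive k') g ->
  (forall v, length v = k' -> dom' v -> dom (map (fun h => h v) g)) ->
  comp_family k dom f -> comp_family k' dom' (fun v => f (map (fun h => h v) g)).
Proof.
  intros Hlen Hg Hdom [s [a [b [e [Hs [Ha [Hb [He H]]]]]]]].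
  set (idx := fun u : list nat => map (fun h => h (firstn k' u)) g ++ [nth k' u 0%nat]).
  assert (Hrec : forall r, recursive (S k) r -> recursive (S k') (fun u => r (idx u))).
  { intros r Hr. eapply recursive_ext.
    - apply (recursive_comp (S k) (S k') r
               (map (fun h u => h (firstn k' u)) g ++ [fun u => nth k' u 0%nat])); auto.
      + apply Forall_app. split; [|repeat constructor; apply recursive_proj].
        apply Forall_map. eapply Forall_impl; [|exact Hg]. intros h. apply recursive_firstn.
      + rewrite length_app, length_map, Hlen. simpl. lia.
    - intros u _. unfold idx. rewrite map_app, List.map_map. reflexivity. }
  exists (fun u => s (idx u)), (fun u => a (idx u)), (fun u => b (idx u)), (fun u => e (idx u)).
  repeat split; try apply Hrec; auto.
  intros v Hv Hd N j Hj.
  assert (Hidx : forall n, idx (v ++ [n]) = map (fun h => h v) g ++ [n]).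
  { intros n. unfold idx. rewrite firstn_app, firstn_all2, Hv, Nat.sub_diag by lia.
    rewrite app_nth2, Hv, Nat.sub_diag by lia. simpl. rewrite app_nil_r. reflexivity. }
  rewrite Hidx in Hj |- *. apply H; auto. rewrite length_map. exact Hlen.
Qed.

Lemma comp_real_of_family k dom f v :
  comp_family k dom f -> length v = k -> dom v -> comp_real (f v).
Proof.
  intros Hf Hv Hd. unfold comp_real.
  apply (comp_family_ext 0 _ (fun u => f (map (fun h => h u) (map (fun c _ => c) v)))).
  - intros u _ _. rewrite List.map_map, map_id. reflexivity.
  - apply (comp_family_reindex k 0 dom); auto.
    + rewrite length_map. exact Hv.
    + apply Forall_map, Forall_forall. intros; apply recursive_const.
    + intros u _ _. rewrite List.map_map, map_id. exact Hd.
Qed.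

Lemma comp_family_fix_tail k dom f w :
  comp_family (S k) dom f -> length w = k -> (forall i, dom (i :: w)) ->
  comp_family 1 (fun _ => True) (fun v => f (nth 0 v 0%nat :: w)).
Proof.
  intros Hf Hw Hdom.
  apply (comp_family_ext 1 _ (fun v => f (map (fun h => h v)
           ((fun v => nth 0 v 0%nat) :: map (fun c _ => c) w)))).
  - intros v _ _. simpl. rewrite List.map_map, map_id. reflexivity.
  - apply (comp_family_reindex (S k) 1 dom); auto.
    + simpl. rewrite length_map. congruence.
    + constructor; [apply recursive_proj|].
      apply Forall_map, Forall_forall. intros; apply recursive_const.
    + intros v _ _. simpl. rewrite List.map_map, map_id. apply Hdom.
Qed.

Lemma comp_real_INR c : comp_real (INR c).
Proof.
  exists (fun _ => 0%nat), (fun _ => c), (fun _ => 0%nat), (fun _ => 0%nat).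
  repeat split; try apply recursive_const.
  intros v _ _ N j _. unfold qof. simpl. rewrite Rdiv_1_r, Rmult_1_l, Rminus_diag, Rabs_R0.
  apply pow_le. lra.
Qed.

Lemma recursive_ifz k c f g :
  recursive k c -> recursive k f -> recursive k g -> recursive k (fun u => ifz (c u) (f u) (g u)).
Proof.
  intros Hc Hf Hg. eapply recursive_ext.
  - apply (recursive_comp 3 k (denote (EIfz (EVar 0) (EVar 1) (EVar 2))) [c; f; g]);
      [apply denote_recursive | repeat constructor; auto | reflexivity].
  - intros u _. cbn [map]. rewrite denote_EIfz. reflexivity.
Qed.

(** * A rate distortion problem at level zero *)

Lemma fsum_S n f : fsum (S n) f = fsum n f + f n.
Proof.
  unfold fsum. rewrite seq_S, map_app, fold_right_app. simpl.
  generalize (map f (seq 0 n)). intros l. induction l as [|a l IH]; simpl; lra.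
Qed.

Lemma fsum_zero n f : (forall j, (j < n)%nat -> f j = 0) -> fsum n f = 0.
Proof. induction n; intros H; [reflexivity|]. rewrite fsum_S, IHn, H; auto; lra. Qed.

Lemma fsum_nonneg n f : (forall j, (j < n)%nat -> 0 <= f j) -> 0 <= fsum n f.
Proof.
  induction n; intros H; [apply Rle_refl|]. rewrite fsum_S.
  apply Rplus_le_le_0_compat; auto.
Qed.

Lemma fsum_nonpos_terms n f :
  (forall j, (j < n)%nat -> 0 <= f j) -> fsum n f <= 0 -> forall j, (j < n)%nat -> f j = 0.
Proof.
  induction n as [|n IH]; intros Hnn Hs j Hj; [lia|]. rewrite fsum_S in Hs.
  assert (0 <= fsum n f) by (apply fsum_nonneg; auto).
  assert (0 <= f n) by auto.
  destruct (Nat.eq_dec j n) as [->|]; [lra|]. apply IH; auto. lra. lia.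
Qed.

Lemma fsum_two n f :
  (2 <= n)%nat -> (forall j, (2 <= j < n)%nat -> f j = 0) -> fsum n f = f 0%nat + f 1%nat.
Proof.
  intros Hn H. induction n as [|n IH]; [lia|].
  destruct (Nat.eq_dec n 1) as [->|].
  - rewrite !fsum_S. unfold fsum. simpl. lra.
  - rewrite fsum_S, IH, (H n) by (try lia; intros; apply H; lia). lra.
Qed.

Definition half_source (i : nat) : R := if (i <? 2)%nat then / 2 else 0.

Definition base_cost (i j : nat) : nat := (Nat.b2n (i <=? 1) * (1 - Nat.b2n (i =? j)))%nat.

Definition distortion (x : R) (i j : nat) : R :=
  if ((i =? 0)%nat && (j =? 1)%nat)%bool then x else INR (base_cost i j).

Definition channel (a : R) (i j : nat) : R :=
  if (i =? 1)%nat then (if (j =? 1)%nat then 1 else 0)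
  else if (j =? 0)%nat then a else if (j =? 1)%nat then 1 - a else 0.

Lemma half_source_distr m : (2 <= m)%nat -> is_distr m half_source.
Proof.
  intros Hm. split.
  - intros i _. unfold half_source. destruct (i <? 2)%nat; lra.
  - rewrite fsum_two; auto; [unfold half_source; simpl; lra|].
    intros j Hj. unfold half_source. replace (j <? 2)%nat with false; auto.
    symmetry; apply Nat.ltb_ge; lia.
Qed.

Lemma half_source_nontrivial m : nontrivial m half_source.
Proof. intros [i [_ H]]. unfold half_source in H. destruct (i <? 2)%nat; lra. Qed.

Lemma distortion_nonneg x i j : 0 <= x -> 0 <= distortion x i j.
Proof. intros Hx. unfold distortion. destruct (_ && _)%bool; [exact Hx | apply pos_INR]. Qed.

Record zero_cost_channel (n : nat) (x : R) (W : nat -> nat -> R) : Prop := {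
  zc_00_nonneg : 0 <= W 0%nat 0%nat;
  zc_00_le1 : W 0%nat 0%nat <= 1;
  zc_01 : W 0%nat 1%nat = 1 - W 0%nat 0%nat;
  zc_0j : forall j, (2 <= j < n)%nat -> W 0%nat j = 0;
  zc_10 : W 1%nat 0%nat = 0;
  zc_11 : W 1%nat 1%nat = 1;
  zc_1j : forall j, (2 <= j < n)%nat -> W 1%nat j = 0;
  zc_cost : x * W 0%nat 1%nat = 0 }.

Lemma feasible_cost_vanishes m n x W :
  (2 <= m)%nat -> 0 <= x -> feasible m n (distortion x) 0 half_source W ->
  forall i j, (i < 2)%nat -> (j < n)%nat -> W i j * distortion x i j = 0.
Proof.
  intros Hm Hx [HW Hd] i j Hi Hj. unfold avg_distortion in Hd.
  assert (Hnn : forall i j, (i < m)%nat -> (j < n)%nat ->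
                  0 <= half_source i * W i j * distortion x i j).
  { intros i' j' Hi' Hj'. apply Rmult_le_pos; [apply Rmult_le_pos|apply distortion_nonneg; auto].
    - unfold half_source; destruct (i' <? 2)%nat; lra.
    - apply (proj1 (HW i' Hi')); auto. }
  assert (Hrow : fsum n (fun j => half_source i * W i j * distortion x i j) = 0).
  { apply (fsum_nonpos_terms m
      (fun i => fsum n (fun j => half_source i * W i j * distortion x i j))); auto; [|lia].
    intros i' Hi'. apply fsum_nonneg. intros; apply Hnn; auto. }
  assert (Hij : half_source i * W i j * distortion x i j = 0).
  { apply (fsum_nonpos_terms n (fun j => half_source i * W i j * distortion x i j)); auto.
    - intros j' Hj'. apply Hnn; auto. lia.
    - rewrite Hrow. lra. }
  unfold half_source in Hij. rewrite (proj2 (Nat.ltb_lt _ _) Hi) in Hij. lra.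
Qed.

Lemma feasible_zero_cost m n x W :
  (2 <= m)%nat -> (2 <= n)%nat -> 0 <= x ->
  feasible m n (distortion x) 0 half_source W -> zero_cost_channel n x W.
Proof.
  intros Hm Hn Hx HF. pose proof (feasible_cost_vanishes m n x W Hm Hx HF) as Hcost.
  assert (Hrest : forall i j, (i < 2)%nat -> (2 <= j < n)%nat -> W i j = 0).
  { intros i j Hi Hj. pose proof (Hcost i j Hi ltac:(lia)) as C.
    unfold distortion, base_cost in C.
    destruct i as [|[|i]], j as [|[|j]]; try lia; simpl in C; lra. }
  destruct HF as [HW _].
  destruct (HW 0%nat ltac:(lia)) as [H0n H0s]. destruct (HW 1%nat ltac:(lia)) as [H1n H1s].
  rewrite fsum_two in H0s, H1s by (auto; intros; apply Hrest; auto).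
  assert (0 <= W 0%nat 0%nat) by (apply H0n; lia).
  assert (0 <= W 0%nat 1%nat) by (apply H0n; lia).
  pose proof (Hcost 1%nat 0%nat ltac:(lia) ltac:(lia)) as C10.
  pose proof (Hcost 0%nat 1%nat ltac:(lia) ltac:(lia)) as C01.
  unfold distortion, base_cost in C10, C01. simpl in C10, C01.
  constructor; try lra; intros; apply Hrest; auto.
Qed.

Lemma channel_feasible m n x a :
  (2 <= m)%nat -> (2 <= n)%nat -> 0 <= a <= 1 -> x * (1 - a) = 0 ->
  feasible m n (distortion x) 0 half_source (channel a).
Proof.
  intros Hm Hn Ha Hx. split.
  - intros i Hi. split.
    + intros j Hj. unfold channel. destruct (i =? 1)%nat, (j =? 1)%nat, (j =? 0)%nat; lra.
    + rewrite fsum_two; auto.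
      * unfold channel. destruct (i =? 1)%nat; simpl; lra.
      * intros j Hj. unfold channel. destruct j as [|[|j]]; [lia|lia|].
        destruct (i =? 1)%nat; reflexivity.
  - unfold avg_distortion. rewrite fsum_zero; [lra|]. intros i Hi. apply fsum_zero. intros j Hj.
    unfold half_source, distortion, base_cost, channel.
    destruct i as [|[|i]], j as [|[|j]]; simpl; lra.
Qed.

Lemma channel_zero_cost n x a : 0 <= a <= 1 -> x * (1 - a) = 0 -> zero_cost_channel n x (channel a).
Proof.
  intros Ha Hx. constructor; unfold channel; simpl; try lra.
  - intros [|[|j]] Hj; (lia || reflexivity).
  - intros [|[|j]] Hj; (lia || reflexivity).
Qed.

Definition plogr (p r : R) : R := if Req_EM_T p 0 then 0 else p * ln r.

Lemma plogr_0 r : plogr 0 r = 0.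
Proof. unfold plogr. destruct (Req_EM_T 0 0); [reflexivity | lra]. Qed.

Lemma plogr_neq0 p r : p <> 0 -> plogr p r = p * ln r.
Proof. unfold plogr. destruct (Req_EM_T p 0); [contradiction | reflexivity]. Qed.

Lemma plogr_congr p p' r r' : p = p' -> (p <> 0 -> r = r') -> plogr p r = plogr p' r'.
Proof.
  intros <- H. destruct (Req_EM_T p 0) as [->|Hp].
  - rewrite !plogr_0. reflexivity.
  - rewrite !plogr_neq0, H; auto.
Qed.

Definition mi_profile (a : R) : R :=
  plogr (a / 2) 2 + plogr ((1 - a) / 2) (2 * (1 - a) / (2 - a)) + / 2 * ln (2 / (2 - a)).

Lemma mutinf_zero_cost m n x W :
  (2 <= m)%nat -> (2 <= n)%nat -> zero_cost_channel n x W ->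
  mutinf m n half_source W = mi_profile (W 0%nat 0%nat).
Proof.
  intros Hm Hn [H00 Hle H01 H0j H10 H11 H1j Hx].
  assert (Hout : forall j, out_distr m half_source W j = / 2 * W 0%nat j + / 2 * W 1%nat j).
  { intros j. unfold out_distr.
    rewrite fsum_two by (auto; intros i Hi; unfold half_source;
                         rewrite (proj2 (Nat.ltb_ge i 2)) by lia; lra).
    unfold half_source. simpl. lra. }
  unfold mutinf.
  rewrite fsum_two by (auto; intros i Hi; apply fsum_zero; intros j Hj; unfold half_source;
    rewrite (proj2 (Nat.ltb_ge i 2)) by lia; cbv zeta; rewrite Rmult_0_l; exact (plogr_0 _)).
  rewrite !(fsum_two n) by (auto; intros j Hj; cbv zeta; rewrite ?H0j, ?H1j by auto;
    rewrite Rmult_0_r; exact (plogr_0 _)).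
  cbv zeta. rewrite !Hout. unfold half_source. simpl.
  change (if Req_EM_T ?p 0 then 0 else ?p * ln ?r) with (plogr p r).
  rewrite H01, H10, H11. set (a := W 0%nat 0%nat) in *.
  rewrite Rmult_0_r, plogr_0. unfold mi_profile.
  rewrite (plogr_neq0 (/ 2 * 1)) by lra.
  rewrite (plogr_congr (/ 2 * a) (a / 2) _ 2) by (try field; intros; field; lra).
  rewrite (plogr_congr (/ 2 * (1 - a)) ((1 - a) / 2) _ (2 * (1 - a) / (2 - a)))
    by (try field; intros; field; lra).
  replace (1 / (/ 2 * (1 - a) + / 2 * 1)) with (2 / (2 - a)) by (field; lra).
  lra.
Qed.

Lemma ln_ge_1_minus_inv y : 0 < y -> 1 - / y <= ln y.
Proof.
  intros Hy. pose proof (exp_ineq1_le (ln (/ y))) as H.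
  rewrite exp_ln, ln_Rinv in H by (try apply Rinv_0_lt_compat; auto). lra.
Qed.

Lemma ln_2_pos : 0 < ln 2.
Proof. pose proof ln_lt_2. lra. Qed.

Lemma mi_profile_0 : mi_profile 0 = 0.
Proof.
  unfold mi_profile. replace (0 / 2) with 0 by field. rewrite plogr_0.
  replace (2 * (1 - 0) / (2 - 0)) with 1 by field. replace (2 / (2 - 0)) with 1 by field.
  rewrite plogr_neq0 by lra. rewrite ln_1. lra.
Qed.

Lemma mi_profile_1_pos : 0 < mi_profile 1.
Proof.
  unfold mi_profile. replace ((1 - 1) / 2) with 0 by field. rewrite plogr_0, plogr_neq0 by lra.
  replace (2 / (2 - 1)) with 2 by field. pose proof ln_2_pos. lra.
Qed.

Lemma mi_profile_nonneg a : 0 <= a <= 1 -> 0 <= mi_profile a.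
Proof.
  intros Ha. unfold mi_profile. pose proof ln_2_pos.
  assert (T1 : 0 <= plogr (a / 2) 2).
  { destruct (Req_EM_T (a / 2) 0) as [->|]; [rewrite plogr_0; lra|].
    rewrite plogr_neq0 by auto. apply Rmult_le_pos; lra. }
  assert (T2 : - (a / 4) <= plogr ((1 - a) / 2) (2 * (1 - a) / (2 - a))).
  { destruct (Req_EM_T ((1 - a) / 2) 0) as [E|E]; [rewrite E, plogr_0; lra|].
    rewrite plogr_neq0 by auto.
    assert (Hr : 0 < 2 * (1 - a) / (2 - a)) by (apply Rdiv_lt_0_compat; lra).
    apply Rle_trans with ((1 - a) / 2 * (1 - / (2 * (1 - a) / (2 - a)))).
    - right. field. lra.
    - apply Rmult_le_compat_l; [lra | apply ln_ge_1_minus_inv, Hr]. }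
  assert (T3 : a / 4 <= / 2 * ln (2 / (2 - a))).
  { apply Rle_trans with (/ 2 * (1 - / (2 / (2 - a)))).
    - right. field. lra.
    - apply Rmult_le_compat_l; [lra|]. apply ln_ge_1_minus_inv, Rdiv_lt_0_compat; lra. }
  lra.
Qed.

Section ZeroDistortion.
Variables (m n : nat).
Hypothesis m_ge2 : (2 <= m)%nat.
Hypothesis n_ge2 : (2 <= n)%nat.

Lemma feasible_entry_pos x W :
  0 < x -> feasible m n (distortion x) 0 half_source W -> W 0%nat 0%nat = 1.
Proof.
  intros Hx HW.
  destruct (feasible_zero_cost m n x W m_ge2 n_ge2 ltac:(lra) HW) as [_ _ H01 _ _ _ _ Hc].
  apply Rmult_integral in Hc as [|]; lra.
Qed.

Lemma optimal_channel_pos x : 0 < x -> P_opt m n (distortion x) 0 half_source (channel 1).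
Proof.
  intros Hx. split; [apply channel_feasible; auto; lra|].
  intros W HW. pose proof (feasible_zero_cost m n x W m_ge2 n_ge2 ltac:(lra) HW) as HZ.
  rewrite (mutinf_zero_cost m n x W), (mutinf_zero_cost m n x (channel 1))
    by (auto; apply channel_zero_cost; lra).
  rewrite (feasible_entry_pos x W); auto. apply Rle_refl.
Qed.

Lemma optimal_channel_zero : P_opt m n (distortion 0) 0 half_source (channel 0).
Proof.
  split; [apply channel_feasible; auto; lra|].
  intros W HW. pose proof (feasible_zero_cost m n 0 W m_ge2 n_ge2 ltac:(lra) HW) as HZ.
  rewrite (mutinf_zero_cost m n 0 W), (mutinf_zero_cost m n 0)
    by (auto; apply channel_zero_cost; lra).
  unfold channel. simpl. rewrite mi_profile_0.
  destruct HZ as [H00 H00' _ _ _ _ _ _]. apply mi_profile_nonneg. lra.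
Qed.

Lemma optimal_entry_zero W : P_opt m n (distortion 0) 0 half_source W -> W 0%nat 0%nat < 1.
Proof.
  intros [HW Hopt]. pose proof (feasible_zero_cost m n 0 W m_ge2 n_ge2 ltac:(lra) HW) as HZ.
  specialize (Hopt _ (channel_feasible m n 0 0 m_ge2 n_ge2 ltac:(lra) ltac:(lra))).
  rewrite (mutinf_zero_cost m n 0 W), (mutinf_zero_cost m n 0) in Hopt
    by (auto; apply channel_zero_cost; lra).
  unfold channel in Hopt. simpl in Hopt. rewrite mi_profile_0 in Hopt.
  destruct HZ as [_ Hle1 _ _ _ _ _ _]. destruct (Req_EM_T (W 0%nat 0%nat) 1) as [E|]; [|lra].
  rewrite E in Hopt. pose proof mi_profile_1_pos. lra.
Qed.
End ZeroDistortion.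

Lemma source_family m :
  comp_family 2 (fun v => (nth 1 v 0 < m)%nat) (fun v => half_source (nth 1 v 0%nat)).
Proof.
  exists (denote (EConst 0)), (denote (ELeb (EVar 1) (EConst 1))), (denote (EConst 1)),
    (denote (EConst 0)).
  repeat split; try apply denote_recursive.
  intros [|k [|i [|]]] Hv _ N J _; simpl in Hv; try lia.
  cbn [app]. rewrite denote_ELeb. cbn [denote nth]. unfold qof, half_source. simpl Nat.even.
  destruct (Nat.leb_spec i 1); [rewrite (proj2 (Nat.ltb_lt i 2)) by lia
                               |rewrite (proj2 (Nat.ltb_ge i 2)) by lia]; simpl;
    (replace (_ - _) with 0 by field); rewrite Rabs_R0; apply pow_le; lra.
Qed.

Lemma zero_level_family : comp_family 1 (fun _ => True) (fun _ => 0).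
Proof.
  exists (fun _ => 0%nat), (fun _ => 0%nat), (fun _ => 0%nat), (fun _ => 0%nat).
  repeat split; try apply recursive_const.
  intros v _ _ N J _. unfold qof. simpl. replace (0 - _) with 0 by field.
  rewrite Rabs_R0. apply pow_le. lra.
Qed.

Definition ESelect := EMul (EEqb (EVar 1) (EConst 0)) (EEqb (EVar 2) (EConst 1)).
Definition EBaseCost := EMul (ELeb (EVar 1) (EConst 1)) (ESub (EConst 1) (EEqb (EVar 1) (EVar 2))).

Lemma denote_ESelect k i j J :
  denote ESelect [k; i; j; J] = Nat.b2n ((i =? 0)%nat && (j =? 1)%nat)%bool.
Proof.
  unfold ESelect. rewrite denote_EMul, !denote_EEqb. cbn [denote nth].
  destruct (i =? 0)%nat, (j =? 1)%nat; reflexivity.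
Qed.

Lemma denote_EBaseCost k i j J : denote EBaseCost [k; i; j; J] = base_cost i j.
Proof.
  unfold EBaseCost. rewrite denote_EMul, denote_ESub, denote_ELeb, denote_EEqb. reflexivity.
Qed.

Lemma distortion_family m n (x : nat -> R) :
  comp_family 1 (fun _ => True) (fun v => x (nth 0 v 0%nat)) ->
  comp_family 3 (fun v => (nth 1 v 0 < m)%nat /\ (nth 2 v 0 < n)%nat)
    (fun v => distortion (x (nth 0 v 0%nat)) (nth 1 v 0%nat) (nth 2 v 0%nat)).
Proof.
  intros [s [a [b [e [Hs [Ha [Hb [He H]]]]]]]].
  set (sel := denote ESelect).
  set (at_k := fun (r : list nat -> nat) (u : list nat) => r [nth 0 u 0%nat; nth 3 u 0%nat]).
  assert (Hat : forall r, recursive 2 r -> recursive 4 (at_k r)).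
  { intros r Hr. exact (recursive_reindex 2 4 r [0%nat; 3%nat] Hr eq_refl). }
  exists (fun u => ifz (sel u) 0 (at_k s u)),
    (fun u => ifz (sel u) (denote EBaseCost u) (at_k a u)),
    (fun u => ifz (sel u) 0 (at_k b u)), (fun u => ifz (sel u) 0 (at_k e u)).
  repeat split;
    try (apply recursive_ifz;
         solve [apply denote_recursive | apply recursive_const | apply Hat; auto]).
  intros [|k [|i [|j [|]]]] Hv _ N J HJ; simpl in Hv; try lia. clear Hv.
  unfold sel, at_k in *. cbn [app nth] in *. rewrite !denote_ESelect in *.
  unfold distortion. destruct ((i =? 0)%nat && (j =? 1)%nat)%bool; cbn [Nat.b2n ifz] in *.
  - exact (H [k] eq_refl I N J HJ).
  - rewrite denote_EBaseCost. unfold qof. simpl. rewrite Rdiv_1_r, Rmult_1_l, Rminus_diag, Rabs_R0.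
    apply pow_le. lra.
Qed.

Lemma half_source_comp m : (2 <= m)%nat -> comp_distr m half_source.
Proof.
  intros Hm. split; [apply half_source_distr, Hm|]. intros i Hi.
  exact (comp_real_of_family 2 _ _ [0%nat; i] (source_family m) eq_refl Hi).
Qed.

Lemma admissible_instance m n x :
  (2 <= m)%nat -> (2 <= n)%nat -> 0 <= x -> comp_real x ->
  admissible m n half_source (distortion x) 0.
Proof.
  intros Hm Hn Hx Hcx. split; [apply half_source_comp, Hm|].
  split; [apply half_source_nontrivial|]. split; [|split].
  - intros i j Hi Hj. split; [apply distortion_nonneg, Hx|].
    unfold distortion. destruct (_ && _)%bool; [exact Hcx | apply comp_real_INR].
  - exact (comp_real_INR 0).
  - destruct (Rle_lt_or_eq_dec 0 x Hx) as [Hpos|<-].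
    + exists (channel 1). apply optimal_channel_pos; auto.
    + exists (channel 0). apply optimal_channel_zero; auto.
Qed.

(** * Deciding membership from a computable jump *)

Definition EAbove (N : nat) : expr :=
  EAnd (ENot (EParity (EVar 0)))
    (ELeb (ESucc (EMul (EConst (2 ^ N - 2)) (ESucc (EVar 2)))) (EMul (EVar 1) (EConst (2 ^ N)))).

Lemma lt_ratio_iff A q p :
  0 < q -> 0 < p -> (1 - 2 * / p < A / q <-> (p - 2) * q < A * p).
Proof.
  intros Hq Hp.
  replace (1 - 2 * / p) with ((p - 2) * q / (p * q)) by (field; lra).
  replace (A / q) with (A * p / (p * q)) by (field; lra).
  assert (Hpq : 0 < / (p * q)) by (apply Rinv_0_lt_compat; nra).
  split; intros H.
  - exact (Rmult_lt_reg_r _ _ _ Hpq H).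
  - exact (Rmult_lt_compat_r _ _ _ Hpq H).
Qed.

Lemma denote_EAbove N s a b :
  (1 <= N)%nat -> denote (EAbove N) [s; a; b] <> 0%nat <-> 1 - 2 * (/ 2) ^ N < qof s a b.
Proof.
  intros HN. unfold EAbove, qof.
  rewrite denote_EAnd, denote_ENot, denote_ELeb_neq0, !denote_EMul, denote_EParity.
  cbn [denote nth]. rewrite denote_EMul. cbn [denote nth].
  assert (Hp : (2 <= 2 ^ N)%nat) by (apply (Nat.pow_le_mono_r 2 1 N); lia).
  assert (Hb : 0 < INR (S b)) by (apply lt_0_INR; lia).
  assert (Ha : 0 <= INR a) by apply pos_INR.
  replace ((/ 2) ^ N) with (/ INR (2 ^ N)) by (rewrite pow_INR, pow_inv; reflexivity).
  set (p := INR (2 ^ N)). assert (H2p : 2 <= p) by (apply (le_INR 2) in Hp; exact Hp).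
  destruct (Nat.even s); cbn [negb Nat.b2n].
  - rewrite Rmult_1_l, lt_ratio_iff by lra.
    split.
    + intros [_ H]. apply lt_INR in H. rewrite !mult_INR, minus_INR in H by lia. exact H.
    + intros H. split; [reflexivity|]. apply INR_lt. rewrite !mult_INR, minus_INR by lia.
      exact H.
  - split; [intros [H _]; discriminate|]. intros H. exfalso.
    assert (0 <= INR a / INR (S b))
      by (apply Rmult_le_pos; [lra | apply Rlt_le, Rinv_0_lt_compat; lra]).
    assert (/ p <= / 2) by (apply Rinv_le_contravar; lra). lra.
Qed.

Lemma recursive_at_modulus r e N :
  recursive 2 r -> recursive 2 e -> recursive 1 (fun u => r [nth 0 u 0%nat; e [nth 0 u 0%nat; N]]).
Proof.
  intros Hr He.
  assert (HeN : recursive 1 (fun u => e [nth 0 u 0%nat; N])).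
  { apply (recursive_comp 2 1 e [fun u => nth 0 u 0%nat; fun _ => N]);
      [exact He | repeat constructor; apply recursive_proj || apply recursive_const
      | reflexivity]. }
  apply (recursive_comp 2 1 r [fun u => nth 0 u 0%nat; fun u => e [nth 0 u 0%nat; N]]);
    [exact Hr | repeat constructor; apply recursive_proj || exact HeN | reflexivity].
Qed.

Lemma Rabs_le_bounds x r : Rabs x <= r -> - r <= x <= r.
Proof.
  intros H. pose proof (Rle_abs x). pose proof (Rle_abs (- x)). rewrite Rabs_Ropp in *. lra.
Qed.

Theorem decidable_of_comp_jump (y : nat -> R) (c : R) (P : nat -> Prop) :
  comp_family 1 (fun _ => True) (fun v => y (nth 0 v 0%nat)) -> c < 1 ->
  (forall k, P k -> y k = 1) -> (forall k, ~ P k -> y k <= c) ->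
  exists delta, recursive 1 delta /\ forall k, P k <-> delta [k] <> 0%nat.
Proof.
  intros [s [a [b [e [Hs [Ha [Hb [He Happ]]]]]]]] Hc Hyes Hno.
  (* Approximate [y k] to within 2^-N < (1 - c) / 4: the threshold 1 - 2^(1-N) then
     separates the value 1 from the values at most c. *)
  destruct (pow_lt_1_zero (/ 2) ltac:(rewrite Rabs_right; lra) ((1 - c) / 4) ltac:(lra))
    as [N0 HN0].
  set (N := Nat.max N0 1).
  assert (Heps : (/ 2) ^ N < (1 - c) / 4).
  { specialize (HN0 N ltac:(lia)). rewrite Rabs_right in HN0; [exact HN0|].
    apply Rle_ge, pow_le. lra. }
  pose proof (half_pow_pos N) as Hpos.
  set (arg := fun u => [nth 0 u 0%nat; e [nth 0 u 0%nat; N]]).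
  exists (fun u => denote (EAbove N) [s (arg u); a (arg u); b (arg u)]). split.
  - apply (recursive_comp 3 1 (denote (EAbove N)) [fun u => s (arg u); fun u => a (arg u);
                                                   fun u => b (arg u)]);
      [apply denote_recursive | repeat constructor; apply recursive_at_modulus; auto | reflexivity].
  - intros k. rewrite denote_EAbove by lia.
    specialize (Happ [k] eq_refl I N _ (Nat.le_refl _)).
    cbn [app nth] in Happ. unfold arg. cbn [nth].
    apply Rabs_le_bounds in Happ. split.
    + intros HP. rewrite (Hyes k HP) in Happ. lra.
    + intros Habove. apply NNPP. intros HP. pose proof (Hno k HP). lra.
Qed.

Theorem mainTheorem1 (m n : nat) (Hm : (2 <= m)%nat) (Hn : (2 <= n)%nat)
  (F : OptFun m n) :
  in_M m n F -> ~ BM_computable m n F.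
Proof.
  intros HF HBM.
  set (x := decay ETrace).
  assert (Hx : comp_family 1 (fun _ => True) (fun v => x (nth 0 v 0%nat)))
    by exact (decay_family ETrace ETrace_local).
  assert (Hadm : forall k, admissible m n half_source (distortion (x k)) 0).
  { intros k. apply admissible_instance; auto.
    - apply decay_nonneg.
    - exact (comp_real_of_family 1 _ _ [k] Hx eq_refl I). }
  pose proof (HBM (fun _ => half_source) (fun k => distortion (x k)) (fun _ => 0)
    (source_family m) (distortion_family m n x Hx) zero_level_family Hadm) as Hout.
  apply returns_zero_on_self_undecidable.
  apply (decidable_of_comp_jump (fun k => F half_source (distortion (x k)) 0 0%nat 0%nat)
           (F half_source (distortion 0) 0 0%nat 0%nat)).
  - apply (comp_family_fix_tail 2 _ _ [0%nat; 0%nat] Hout eq_refl). intros i. simpl. lia.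
  - apply (optimal_entry_zero m n Hm Hn), HF, admissible_instance;
      [exact Hm | exact Hn | apply Rle_refl | exact (comp_real_INR 0)].
  - intros k Hk. apply (feasible_entry_pos m n Hm Hn (x k)).
    + apply returns_zero_on_self_iff_decay_pos, Hk.
    + exact (proj1 (HF _ _ _ (Hadm k))).
  - intros k Hk. rewrite returns_zero_on_self_iff_decay_pos in Hk.
    replace (x k) with 0; [apply Rle_refl|]. pose proof (decay_nonneg ETrace k). unfold x. lra.
Qed.
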